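(* Let $\sigma:\mathbb{R}\to\mathbb{R}$ be a non-decreasing sigmoidal function (i.e. $\lim_{x\to-\infty}\sigma(x)=0$, $\lim_{x\to+\infty}\sigma(x)=1$) such that $\sigma(x)-1/2$ is odd, $\sigma\in C^2(\mathbb{R})$ is concave for $x\ge 0$, and $\sigma(x)=\mathcal{O}(|x|^{-1-\alpha})$ as $x\to-\infty$ for some $\alpha>2$. Let $\phi_\sigma(x):=\frac12[\sigma(x+1)-\sigma(x-1)]$, let $\widehat{\phi_\sigma}(v):=\int_{\mathbb{R}}\phi_\sigma(x)e^{-ixv}\,dx$ be its Fourier transform, and for $\nu\in\mathbb{N}$ let $\mathcal{A}_\nu(\phi_\sigma,u):=\sum_{k\in\mathbb{Z}}\phi_\sigma(u-k)(k-u)^\nu$, $u\in\mathbb{R}$. If the condition $$\left[\widehat{\phi_\sigma}\right]^{(s)}(2\pi k)=0,\quad k\in\mathbb{Z}\setminus\{0\},\quad s=1,2,$$ holds, then $$\mathcal{A}_1(\phi_\sigma,u)=0,\qquad \mathcal{A}_2(\phi_\sigma,u)=\left[\widehat{\phi_\sigma}\right]''(0)>0,\qquad u\in\mathbb{R}.$$ In particular, if $\phi_\sigma$ is band-limited with $\mathrm{supp}\,\widehat{\phi_\sigma}\subset[-2\pi,2\pi]$, the condition $\left[\widehat{\phi_\sigma}\right]^{(s)}(2\pi k)=0$ for $k\in\mathbb{Z}\setminus\{0\}$, $s=1,2$, trivially holds.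
   Context: $\sigma$ is a non-decreasing sigmoidal function satisfying: $\sigma(x)-1/2$ is odd; $\sigma\in C^2(\mathbb{R})$ concave for $x\geq0$; $\sigma(x)=\mathcal{O}(|x|^{-1-\alpha})$ as $x\to-\infty$. The density $\phi_\sigma(x)=\frac12[\sigma(x+1)-\sigma(x-1)]$ is even and satisfies $\sum_{k\in\mathbb{Z}}\phi_\sigma(u-k)=1$. The Fourier transform of $f\in L^1(\mathbb{R})$ is $\widehat f(v)=\int_{\mathbb{R}}f(x)e^{-ixv}dx$. The algebraic moments are $\mathcal{A}_\nu(\phi_\sigma,u)=\sum_{k\in\mathbb{Z}}\phi_\sigma(u-k)(k-u)^\nu$. *)

From Stdlib Require Import Reals ZArith.
From Coquelicot Require Import Coquelicot.
Open Scope R_scope.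

Definition phi_sigma (sigma : R -> R) (x : R) : R :=
  / 2 * (sigma (x + 1) - sigma (x - 1)).

(* Fourier transform  \hat f(v) = \int_R f(x) e^{-ixv} dx, split into its
   real and imaginary parts (improper Riemann integrals over R):
   Re \hat f(v) =  \int f(x) cos(xv) dx,  Im \hat f(v) = - \int f(x) sin(xv) dx *)
Definition FT_re (f : R -> R) (v : R) : R :=
  @RInt_gen R_CompleteNormedModule (fun x => f x * cos (x * v))
    (Rbar_locally m_infty) (Rbar_locally p_infty).

Definition FT_im (f : R -> R) (v : R) : R :=
  - @RInt_gen R_CompleteNormedModule (fun x => f x * sin (x * v))
    (Rbar_locally m_infty) (Rbar_locally p_infty).

Definition is_zsum (a : Z -> R) (l : R) : Prop :=
  exists l1 l2,
    is_series (fun n : nat => a (Z.of_nat n)) l1 /\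
    is_series (fun n : nat => a (- Z.of_nat n - 1)%Z) l2 /\
    l = l1 + l2.

Definition is_moment (phi : R -> R) (nu : nat) (u l : R) : Prop :=
  is_zsum (fun k => phi (u - IZR k) * (IZR k - u) ^ nu) l.

Definition sigmoidal_hyp (sigma : R -> R) (alpha : R) : Prop :=
  (forall x y, x <= y -> sigma x <= sigma y) /\
  is_lim sigma m_infty 0 /\ is_lim sigma p_infty 1 /\
  (forall x, sigma (- x) - / 2 = - (sigma x - / 2)) /\
  (forall x, ex_derive sigma x) /\
  (forall x, ex_derive (Derive sigma) x) /\
  (forall x, continuous (Derive_n sigma 2) x) /\
  (forall x y t, 0 <= x -> 0 <= y -> 0 <= t <= 1 ->
     t * sigma x + (1 - t) * sigma y <= sigma (t * x + (1 - t) * y)) /\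
  (exists C M, M < 0 /\ forall x, x <= M ->
     Rabs (sigma x) <= C * Rpower (Rabs x) (- 1 - alpha)).

(* Condition [\hat phi]^{(s)}(2 pi k) = 0, k in Z\{0}, s = 1,2
   (derivatives of the complex function, componentwise) *)
Definition FT_deriv_cond (phi : R -> R) : Prop :=
  forall (k : Z) (s : nat), k <> 0%Z -> (s = 1 \/ s = 2)%nat ->
    is_derive_n (FT_re phi) s (2 * PI * IZR k) 0 /\
    is_derive_n (FT_im phi) s (2 * PI * IZR k) 0.

From Stdlib Require Import Reals ZArith Lra Lia FunctionalExtensionality.
From Coquelicot Require Import Coquelicot.
Open Scope R_scope.

(* Evenness of phi_sigma kills the imaginary part of its Fourier transform, and the
   decay of sigma gives (1 + x^2) phi_sigma(x) = O((1 + |x|)^(1 - alpha)) with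
   alpha - 1 > 1, so the real part may be differentiated twice under the integral.
   For g(x) = phi_sigma(x) (-x)^nu (nu = 1, 2) the hypothesis then says that the
   1-periodic continuous function sum_k g(u - k) has the Fourier coefficients of the
   constant \int g, hence equals it (uniqueness of Fourier coefficients, proved with
   the peaking kernels (kappa + cos 2 pi (u - u0))^n).  So A_1 = \int -x phi_sigma = 0
   (odd integrand) and A_2 = \int x^2 phi_sigma = -(Re phi_sigma^)''(0) > 0, as
   phi_sigma >= 0 is not identically 0.  If the transform vanishes for |v| > 2 pi,
   so do its derivatives for |v| >= 2 pi. *)

Lemma continuous_R_mult (f g : R -> R) x :
  continuous f x -> continuous g x -> continuous (fun y => f y * g y) x.
Proof. intros; apply (@continuous_mult R_UniformSpace R_AbsRing f g); auto. Qed.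

Lemma continuous_R_plus (f g : R -> R) x :
  continuous f x -> continuous g x -> continuous (fun y => f y + g y) x.
Proof. intros; apply (@continuous_plus R_UniformSpace R_AbsRing R_NormedModule f g); auto. Qed.

Lemma continuous_R_opp (f : R -> R) x : continuous f x -> continuous (fun y => - f y) x.
Proof. intros; apply (@continuous_opp R_UniformSpace R_AbsRing R_NormedModule f); auto. Qed.

Lemma continuous_R_minus (f g : R -> R) x :
  continuous f x -> continuous g x -> continuous (fun y => f y - g y) x.
Proof. intros; apply continuous_R_plus; auto; apply continuous_R_opp; auto. Qed.

Lemma continuous_R_pow (f : R -> R) n x : continuous f x -> continuous (fun y => f y ^ n) x.
Proof.
  intros H. induction n as [|n IH].
  - apply (continuous_ext (fun _ => 1)); [reflexivity | apply continuous_const].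
  - apply (continuous_ext (fun y => f y * f y ^ n)); [reflexivity |].
    apply continuous_R_mult; auto.
Qed.

Lemma continuous_of_ex_derive (f : R -> R) x : ex_derive f x -> continuous f x.
Proof. apply (@ex_derive_continuous R_AbsRing R_NormedModule). Qed.

Ltac auto_continuous := repeat match goal with
 | |- continuous (fun _ => _ * _) _ => apply continuous_R_mult
 | |- continuous (fun _ => _ + _) _ => apply continuous_R_plus
 | |- continuous (fun _ => _ - _) _ => apply continuous_R_minus
 | |- continuous (fun _ => - _) _ => apply continuous_R_opp
 | |- continuous (fun _ => cos _) _ => apply continuous_cos_comp
 | |- continuous (fun _ => sin _) _ => apply continuous_sin_comp
 | |- continuous (fun _ => _ ^ _) _ => apply continuous_R_pow
 | |- continuous (fun x => x) _ => apply continuous_id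
 | |- continuous Ropp _ => apply (continuous_R_opp (fun x => x))
 | |- continuous (fun _ => ?c) _ => apply continuous_const
 | |- continuous _ _ => solve [auto]
 end.

Lemma continuous_R_eps (f : R -> R) x eps : continuous f x -> 0 < eps ->
  exists d, 0 < d /\ forall y, Rabs (y - x) < d -> Rabs (f y - f x) < eps.
Proof.
  intros H He. apply continuity_pt_filterlim in H.
  destruct (H eps He) as [d [Hd Hy]].
  exists d. split; auto. intros y Hy'.
  destruct (Req_dec y x) as [->|Hne].
  - rewrite Rminus_diag, Rabs_R0. auto.
  - apply (Hy y). repeat split; auto.
Qed.

Lemma continuous_R_of_eps (f : R -> R) x :
  (forall eps, 0 < eps -> exists d, 0 < d /\ forall y, Rabs (y - x) < d -> Rabs (f y - f x) < eps) ->
  continuous f x.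
Proof.
  intros H. apply continuity_pt_filterlim.
  intros eps He. destruct (H eps He) as [d [Hd Hy]].
  exists d. split; auto. intros y [_ Hy']. apply Hy. exact Hy'.
Qed.

Lemma Req_of_abs_lt_all x y : (forall eps, 0 < eps -> Rabs (x - y) < eps) -> x = y.
Proof.
  intros H. destruct (Req_dec x y) as [|Hne]; auto. exfalso.
  assert (Hpos : 0 < Rabs (x - y)) by (apply Rabs_pos_lt; lra).
  specialize (H _ Hpos). lra.
Qed.

Section ContinuousIntegrals.

Variable f : R -> R.
Hypothesis f_cont : forall x, continuous f x.

Lemma ex_RInt_R a b : ex_RInt f a b.
Proof. apply (@ex_RInt_continuous R_CompleteNormedModule). intros; apply f_cont. Qed.

Lemma RInt_Chasles_R a b c : RInt f a b + RInt f b c = RInt f a c.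
Proof. apply (@RInt_Chasles R_CompleteNormedModule); apply ex_RInt_R. Qed.

Lemma RInt_scal_R k a b : RInt (fun x => k * f x) a b = k * RInt f a b.
Proof. apply (@RInt_scal R_CompleteNormedModule). apply ex_RInt_R. Qed.

Lemma RInt_ge_const a b c : a <= b -> (forall x, a < x < b -> c <= f x) ->
  (b - a) * c <= RInt f a b.
Proof.
  intros Hab H.
  replace ((b - a) * c) with (RInt (fun _ => c) a b) by (rewrite RInt_const; reflexivity).
  apply RInt_le; auto. apply ex_RInt_const. apply ex_RInt_R.
Qed.

Lemma abs_RInt_le_R (g : R -> R) a b : a <= b -> (forall x, continuous g x) ->
  (forall x, a <= x <= b -> Rabs (f x) <= g x) -> Rabs (RInt f a b) <= RInt g a b.
Proof.
  intros Hab Hg H.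
  eapply Rle_trans. apply abs_RInt_le; auto. apply ex_RInt_R.
  apply RInt_le; auto.
  - apply (@ex_RInt_continuous R_CompleteNormedModule).
    intros; apply continuous_Rabs_comp; auto.
  - apply (@ex_RInt_continuous R_CompleteNormedModule). intros; auto.
  - intros x Hx; apply H; lra.
Qed.

End ContinuousIntegrals.

Lemma RInt_ext_R (f g : R -> R) a b : (forall x, f x = g x) -> RInt f a b = RInt g a b.
Proof. intros H. apply RInt_ext. intros; apply H. Qed.

Lemma Rpower_opp_decreasing a b q : 0 <= q -> 0 < a <= b -> Rpower b (- q) <= Rpower a (- q).
Proof.
  intros Hq Hab. rewrite !Rpower_Ropp.
  apply Rinv_le_contravar. unfold Rpower; apply exp_pos.
  apply Rle_Rpower_l; lra.
Qed.

Lemma Rpower_pos a b : 0 < Rpower a b.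
Proof. apply exp_pos. Qed.

Section PowerWeight.

Variable p : R.
Hypothesis p_gt1 : 1 < p.

Definition weight (x : R) : R := Rpower (1 + Rabs x) (- p).

(* [weight_tail s] is the integral of [weight] over [s, +oo), for s >= 0. *)
Definition weight_tail (s : R) : R := Rpower (1 + s) (1 - p) / (p - 1).

Lemma weight_pos x : 0 < weight x.
Proof. apply Rpower_pos. Qed.

Lemma weight_Rabs x : weight (Rabs x) = weight x.
Proof. unfold weight. now rewrite Rabs_Rabsolu. Qed.

Lemma weight_opp x : weight (- x) = weight x.
Proof. unfold weight. now rewrite Rabs_Ropp. Qed.

Lemma weight_decreasing x y : 0 <= x <= y -> weight y <= weight x.
Proof.
  intros H. unfold weight. rewrite !Rabs_pos_eq by lra.
  apply Rpower_opp_decreasing; lra.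
Qed.

Lemma weight_le_1 x : weight x <= 1.
Proof.
  replace 1 with (weight 0)
    by (unfold weight, Rpower; rewrite Rabs_R0, Rplus_0_r, ln_1, Rmult_0_r; apply exp_0).
  rewrite <- weight_Rabs. apply weight_decreasing. split; [apply Rle_refl | apply Rabs_pos].
Qed.

Lemma weight_continuous x : continuous weight x.
Proof.
  apply (continuous_comp Rabs (fun y => Rpower (1 + y) (- p))).
  - apply continuous_Rabs.
  - apply continuous_of_ex_derive. unfold Rpower.
    auto_derive. generalize (Rabs_pos x); lra.
Qed.

Lemma weight_tail_derive s : -1 < s -> is_derive weight_tail s (- Rpower (1 + s) (- p)).
Proof.
  intros Hs. unfold weight_tail, Rpower.
  auto_derive; [lra |].
  replace (- p) with ((1 - p) + (-1)) by ring.
  rewrite Rmult_plus_distr_r, exp_plus.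
  replace (-1 * ln (1 + s)) with (ln (/ (1 + s))) by (rewrite ln_Rinv by lra; ring).
  rewrite exp_ln by (apply Rinv_0_lt_compat; lra).
  field. lra.
Qed.

Lemma is_RInt_weight s t : 0 <= s <= t -> is_RInt weight s t (weight_tail s - weight_tail t).
Proof.
  intros H.
  replace (weight_tail s - weight_tail t)
    with (minus ((fun x => - weight_tail x) t) ((fun x => - weight_tail x) s))
    by (unfold minus, plus, opp; simpl; ring).
  apply (@is_RInt_derive R_CompleteNormedModule (fun x => - weight_tail x) weight).
  - intros x Hx. rewrite Rmin_left, Rmax_right in Hx by lra.
    unfold weight. rewrite Rabs_pos_eq by lra.
    replace (Rpower (1 + x) (- p)) with (- (- Rpower (1 + x) (- p))) by ring.
    apply (is_derive_opp weight_tail). apply weight_tail_derive. lra.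
  - intros x _. apply weight_continuous.
Qed.

Lemma is_RInt_weight_opp s t : 0 <= s <= t -> is_RInt weight (- t) (- s) (weight_tail s - weight_tail t).
Proof.
  intros H.
  replace (weight_tail s - weight_tail t)
    with (minus ((fun x => weight_tail (- x)) (- s)) ((fun x => weight_tail (- x)) (- t)))
    by (unfold minus, plus, opp; simpl; rewrite !Ropp_involutive; ring).
  apply (@is_RInt_derive R_CompleteNormedModule (fun x => weight_tail (- x)) weight).
  - intros x Hx. rewrite Rmin_left, Rmax_right in Hx by lra.
    unfold weight. rewrite Rabs_left1 by lra.
    replace (Rpower (1 + - x) (- p)) with ((-1) * - Rpower (1 + - x) (- p)) by ring.
    apply (is_derive_comp weight_tail Ropp).
    + apply weight_tail_derive. lra.
    + auto_derive; auto; ring.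
  - intros x _. apply weight_continuous.
Qed.

Lemma weight_tail_nonneg s : -1 < s -> 0 <= weight_tail s.
Proof.
  intros Hs. unfold weight_tail. apply Rmult_le_pos.
  - left; apply Rpower_pos.
  - left; apply Rinv_0_lt_compat; lra.
Qed.

Lemma weight_tail_decreasing s t : 0 <= s <= t -> weight_tail t <= weight_tail s.
Proof.
  intros H. unfold weight_tail. apply Rmult_le_compat_r.
  - left; apply Rinv_0_lt_compat; lra.
  - replace (1 - p) with (- (p - 1)) by ring.
    apply Rpower_opp_decreasing; lra.
Qed.

Lemma weight_tail_small eps : 0 < eps -> exists A, 0 <= A /\ weight_tail A < eps.
Proof.
  intros He.
  set (c := Rmax 0 (ln (eps * (p - 1)) / (1 - p)) + 1).
  assert (Hc : 1 <= exp c).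
  { rewrite <- exp_0. left. apply exp_increasing. unfold c. generalize (Rmax_l 0 (ln (eps * (p - 1)) / (1 - p))). lra. }
  exists (exp c - 1). split; [lra |].
  unfold weight_tail. replace (1 + (exp c - 1)) with (exp c) by ring.
  unfold Rpower. rewrite ln_exp.
  apply (Rmult_lt_reg_r (p - 1)); [lra |].
  unfold Rdiv. rewrite Rmult_assoc, Rinv_l, Rmult_1_r by lra.
  rewrite <- (exp_ln (eps * (p - 1))) by (apply Rmult_lt_0_compat; lra).
  apply exp_increasing.
  assert (Hln : (1 - p) * (ln (eps * (p - 1)) / (1 - p)) = ln (eps * (p - 1))) by (field; lra).
  assert (ln (eps * (p - 1)) / (1 - p) <= Rmax 0 (ln (eps * (p - 1)) / (1 - p))) by apply Rmax_r.
  unfold c. nra.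
Qed.

Lemma weight_tail_eventually_small K eps : 0 <= K -> 0 < eps ->
  exists A, 0 <= A /\ forall B, A <= B -> K * weight_tail B < eps.
Proof.
  intros HK He.
  destruct (weight_tail_small (eps / (K + 1))) as [A [HA HT]].
  { apply Rdiv_lt_0_compat; lra. }
  exists A. split; auto. intros B HB.
  assert (HTB : weight_tail B <= weight_tail A) by (apply weight_tail_decreasing; lra).
  assert (0 <= weight_tail B) by (apply weight_tail_nonneg; lra).
  apply Rle_lt_trans with ((K + 1) * weight_tail A); [nra |].
  replace eps with ((K + 1) * (eps / (K + 1))) by (field; lra).
  apply Rmult_lt_compat_l; lra.
Qed.

End PowerWeight.

Definition IntR (f : R -> R) : R :=
  @RInt_gen R_CompleteNormedModule f (Rbar_locally m_infty) (Rbar_locally p_infty).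

Definition dominated (p K : R) (f : R -> R) : Prop :=
  (forall x, continuous f x) /\ (forall x, Rabs (f x) <= K * weight p x).

Section Dominated.

Variable p : R.
Hypothesis p_gt1 : 1 < p.

Lemma dominated_K_nonneg K f : dominated p K f -> 0 <= K.
Proof.
  intros [_ Hb]. generalize (Hb 0) (weight_pos p 0) (Rabs_pos (f 0)). intros.
  destruct (Rle_dec 0 K); auto. nra.
Qed.

Lemma weight_tail_zero_of_bound K x : 0 <= K ->
  (forall A, 0 <= A -> Rabs x <= K * weight_tail p A) -> x = 0.
Proof.
  intros HK H. apply Rabs_eq_0. apply Rle_antisym; [| apply Rabs_pos].
  apply Rnot_lt_le. intros Hx.
  destruct (weight_tail_eventually_small p p_gt1 K (Rabs x) HK Hx) as [A [HA HT]].
  specialize (H A HA). specialize (HT A (Rle_refl A)). lra.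
Qed.

Section Tails.

Variables (f : R -> R) (K : R).
Hypothesis f_dom : dominated p K f.

Let f_cont : forall x, continuous f x := proj1 f_dom.
Let K_nonneg : 0 <= K := dominated_K_nonneg K f f_dom.

Lemma Kweight_continuous x : continuous (fun y => K * weight p y) x.
Proof. auto_continuous. apply weight_continuous. Qed.

Lemma abs_RInt_tail_right A b : 0 <= A <= b -> Rabs (RInt f A b) <= K * weight_tail p A.
Proof.
  intros H.
  eapply Rle_trans.
  { apply (abs_RInt_le_R f f_cont (fun x => K * weight p x)); [lra | apply Kweight_continuous |].
    intros; apply f_dom. }
  rewrite RInt_scal_R by apply weight_continuous.
  rewrite (is_RInt_unique _ _ _ _ (is_RInt_weight p p_gt1 A b H)).
  assert (0 <= weight_tail p b) by (apply weight_tail_nonneg; lra).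
  nra.
Qed.

Lemma abs_RInt_tail_left A a : a <= - A -> 0 <= A -> Rabs (RInt f a (- A)) <= K * weight_tail p A.
Proof.
  intros H H0.
  eapply Rle_trans.
  { apply (abs_RInt_le_R f f_cont (fun x => K * weight p x)); [lra | apply Kweight_continuous |].
    intros; apply f_dom. }
  rewrite RInt_scal_R by apply weight_continuous.
  replace a with (- (- a)) by ring.
  rewrite (is_RInt_unique _ _ _ _ (is_RInt_weight_opp p p_gt1 A (- a) ltac:(lra))).
  assert (0 <= weight_tail p (- a)) by (apply weight_tail_nonneg; lra).
  nra.
Qed.

Lemma RInt_window_approx a b A : a <= - A -> 0 <= A -> A <= b ->
  Rabs (RInt f a b - RInt f (- A) A) <= 2 * K * weight_tail p A.
Proof.
  intros H1 H2 H3.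
  rewrite <- (RInt_Chasles_R f f_cont a (- A) b), <- (RInt_Chasles_R f f_cont (- A) A b).
  replace (RInt f a (- A) + (RInt f (- A) A + RInt f A b) - RInt f (- A) A)
    with (RInt f a (- A) + RInt f A b) by ring.
  eapply Rle_trans; [apply Rabs_triang |].
  generalize (abs_RInt_tail_left A a H1 H2) (abs_RInt_tail_right A b ltac:(lra)). lra.
Qed.

Let window (n : nat) := RInt f (- INR n) (INR n).

Lemma window_approx n A : 0 <= A <= INR n ->
  Rabs (window n - RInt f (- A) A) <= 2 * K * weight_tail p A.
Proof. intros H. apply RInt_window_approx; lra. Qed.

Lemma window_cauchy : ex_finite_lim_seq window.
Proof.
  apply ex_lim_seq_cauchy_corr. intros eps.
  destruct (weight_tail_eventually_small p p_gt1 (4 * K) eps ltac:(lra) (cond_pos eps))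
    as [A [HA HAB]].
  destruct (INR_unbounded A) as [N HN].
  exists N. intros n m Hn Hm.
  assert (INR N <= INR n) by (apply le_INR; lia).
  assert (INR N <= INR m) by (apply le_INR; lia).
  generalize (window_approx n (INR N) ltac:(split; [apply pos_INR | lra]))
             (window_approx m (INR N) ltac:(split; [apply pos_INR | lra])).
  intros X1 X2. specialize (HAB (INR N) ltac:(lra)).
  replace (window n - window m) with
    ((window n - RInt f (- INR N) (INR N)) - (window m - RInt f (- INR N) (INR N))) by ring.
  eapply Rle_lt_trans; [apply Rabs_triang | rewrite Rabs_Ropp; lra].
Qed.

Lemma limit_window_approx (l : R) : is_lim_seq window l -> forall A, 0 <= A ->
  Rabs (l - RInt f (- A) A) <= 2 * K * weight_tail p A.
Proof.
  intros Hl A HA.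
  assert (Hle := is_lim_seq_le_loc (fun n => Rabs (window n - RInt f (- A) A))
    (fun _ => 2 * K * weight_tail p A) (Rabs (l - RInt f (- A) A)) (2 * K * weight_tail p A)).
  apply Hle.
  - destruct (INR_unbounded A) as [N HN]. exists N. intros n Hn.
    apply window_approx. split; auto. assert (INR N <= INR n) by (apply le_INR; lia). lra.
  - apply (is_lim_seq_abs _ (Finite (l - RInt f (- A) A))).
    apply (is_lim_seq_minus' _ _ l _ Hl). apply is_lim_seq_const.
  - apply is_lim_seq_const.
Qed.

Lemma is_RInt_gen_dominated : exists l,
  is_RInt_gen f (Rbar_locally m_infty) (Rbar_locally p_infty) l /\
  forall A, 0 <= A -> Rabs (l - RInt f (- A) A) <= 2 * K * weight_tail p A.
Proof.
  destruct window_cauchy as [l Hl].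
  assert (Hb := limit_window_approx l Hl).
  exists l. split; auto.
  intros P [eps Heps].
  destruct (weight_tail_eventually_small p p_gt1 (4 * K) eps ltac:(lra) (cond_pos eps))
    as [A [HA HAB]].
  specialize (HAB A (Rle_refl A)).
  exists (fun a => a < - A) (fun b => A < b).
  - exists (- A). auto.
  - exists A. auto.
  - intros a b Ha Hb'. simpl. exists (RInt f a b). split.
    + apply (@RInt_correct R_CompleteNormedModule). apply ex_RInt_R, f_cont.
    + apply Heps. unfold ball; simpl; unfold AbsRing_ball, abs, minus, plus, opp; simpl.
      generalize (RInt_window_approx a b A ltac:(lra) HA ltac:(lra)) (Hb A HA).
      replace (RInt f a b + - l) with ((RInt f a b - RInt f (- A) A) - (l - RInt f (- A) A)) by ring.
      generalize (Rabs_triang (RInt f a b - RInt f (- A) A) (- (l - RInt f (- A) A))).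
      rewrite Rabs_Ropp. unfold Rminus in *. lra.
Qed.

Lemma IntR_correct : is_RInt_gen f (Rbar_locally m_infty) (Rbar_locally p_infty) (IntR f).
Proof.
  destruct is_RInt_gen_dominated as [l [Hl _]].
  unfold IntR. rewrite (is_RInt_gen_unique f l Hl). exact Hl.
Qed.

Lemma IntR_window_approx A : 0 <= A ->
  Rabs (IntR f - RInt f (- A) A) <= 2 * K * weight_tail p A.
Proof.
  destruct is_RInt_gen_dominated as [l [Hl HA]].
  unfold IntR. rewrite (is_RInt_gen_unique f l Hl). exact (HA A).
Qed.

Lemma abs_IntR_le : Rabs (IntR f) <= 2 * K * weight_tail p 0.
Proof.
  generalize (IntR_window_approx 0 (Rle_refl 0)).
  rewrite Ropp_0, RInt_point. unfold zero; simpl. rewrite Rminus_0_r. auto.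
Qed.

Lemma IntR_odd : (forall x, f (- x) = - f x) -> IntR f = 0.
Proof.
  intros Hodd.
  apply (weight_tail_zero_of_bound (2 * K)); [lra |]. intros A HA.
  replace (IntR f) with (IntR f - RInt f (- A) A); [apply IntR_window_approx; auto |].
  enough (RInt f (- A) A = 0) by lra.
  assert (E : RInt f (- A) A = RInt f A (- A)).
  { apply is_RInt_unique.
    apply (is_RInt_ext (fun y => opp (f (- y)))).
    { intros x _. rewrite Hodd. unfold opp; simpl. ring. }
    apply (@is_RInt_comp_opp R_NormedModule f).
    rewrite Ropp_involutive. apply (@RInt_correct R_CompleteNormedModule), ex_RInt_R, f_cont. }
  assert (E2 : RInt f A (- A) = - RInt f (- A) A).
  { symmetry. apply (opp_RInt_swap f (- A) A), ex_RInt_R, f_cont. }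
  lra.
Qed.

Lemma IntR_pos x1 : (forall x, 0 <= f x) -> 0 < f x1 -> 0 < IntR f.
Proof.
  intros Hnn Hx1.
  destruct (continuous_R_eps f x1 (f x1 / 2) (f_cont x1)) as [d [Hd Hdd]]; [lra |].
  destruct (weight_tail_eventually_small p p_gt1 (2 * K) (d * f x1 / 4) ltac:(lra) ltac:(nra))
    as [A [HA HAB]].
  set (B := Rmax A (Rabs x1 + d)).
  assert (HB1 : A <= B) by apply Rmax_l.
  assert (HB2 : Rabs x1 + d <= B) by apply Rmax_r.
  specialize (HAB B HB1).
  generalize (IntR_window_approx B ltac:(generalize (Rabs_pos x1); lra)). intros X.
  assert (Hin : (x1 + d / 2 - (x1 - d / 2)) * (f x1 / 2) <= RInt f (x1 - d / 2) (x1 + d / 2)).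
  { apply RInt_ge_const; auto; [lra |].
    intros x Hx. specialize (Hdd x ltac:(apply Rabs_def1; lra)). apply Rabs_def2 in Hdd. lra. }
  assert (Hl : 0 <= RInt f (- B) (x1 - d / 2)).
  { apply RInt_ge_0; auto.
    - generalize (Rle_abs (- x1)); rewrite Rabs_Ropp; lra.
    - apply ex_RInt_R, f_cont. }
  assert (Hr : 0 <= RInt f (x1 + d / 2) B).
  { apply RInt_ge_0; auto.
    - generalize (Rle_abs x1); lra.
    - apply ex_RInt_R, f_cont. }
  rewrite <- (RInt_Chasles_R f f_cont _ (x1 + d / 2)), <- (RInt_Chasles_R f f_cont _ (x1 - d / 2)) in X.
  generalize (Rle_abs (- (IntR f - (RInt f (- B) (x1 - d / 2) + RInt f (x1 - d / 2) (x1 + d / 2)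
    + RInt f (x1 + d / 2) B)))). rewrite Rabs_Ropp. nra.
Qed.

End Tails.

Lemma IntR_ext f g : (forall x, f x = g x) -> IntR f = IntR g.
Proof. intros H. unfold IntR. f_equal. apply functional_extensionality. auto. Qed.

Lemma IntR_plus f g Kf Kg : dominated p Kf f -> dominated p Kg g ->
  IntR (fun x => f x + g x) = IntR f + IntR g.
Proof.
  intros Hf Hg. unfold IntR at 1.
  apply (is_RInt_gen_unique (fun x => f x + g x)).
  apply (is_RInt_gen_plus f g); [apply (IntR_correct f Kf Hf) | apply (IntR_correct g Kg Hg)].
Qed.

Lemma IntR_scal f c K : dominated p K f -> IntR (fun x => c * f x) = c * IntR f.
Proof.
  intros Hf. unfold IntR at 1.
  apply (is_RInt_gen_unique (fun x => c * f x)).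
  apply (is_RInt_gen_scal f c). apply (IntR_correct f K Hf).
Qed.

Lemma dominated_plus f g Kf Kg : dominated p Kf f -> dominated p Kg g ->
  dominated p (Kf + Kg) (fun x => f x + g x).
Proof.
  intros [Hf1 Hf2] [Hg1 Hg2]. split.
  - intros x. auto_continuous.
  - intros x. eapply Rle_trans; [apply Rabs_triang |]. generalize (Hf2 x) (Hg2 x). lra.
Qed.

Lemma dominated_scal f c K : dominated p K f -> dominated p (Rabs c * K) (fun x => c * f x).
Proof.
  intros [Hf1 Hf2]. split.
  - intros x. auto_continuous.
  - intros x. rewrite Rabs_mult, Rmult_assoc. apply Rmult_le_compat_l; [apply Rabs_pos | auto].
Qed.

Lemma dominated_mult_bounded f t K : dominated p K f ->
  (forall x, continuous t x) -> (forall x, Rabs (t x) <= 1) ->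
  dominated p K (fun x => f x * t x).
Proof.
  intros [Hfc Hfb] Htc Htb. split.
  - intros x. auto_continuous.
  - intros x. rewrite Rabs_mult. eapply Rle_trans; [| apply (Hfb x)].
    generalize (Htb x) (Rabs_pos (f x)) (Rabs_pos (t x)). nra.
Qed.

End Dominated.

Lemma Rabs_cos_le_1 t : Rabs (cos t) <= 1.
Proof. apply Rabs_le; apply COS_bound. Qed.

Lemma Rabs_sin_le_1 t : Rabs (sin t) <= 1.
Proof. apply Rabs_le; apply SIN_bound. Qed.

Lemma Rabs_sin_sub_le a b : Rabs (sin (a + b) - sin a) <= Rabs b.
Proof.
  destruct (MVT_abs sin cos a (a + b)) as [c [Hc _]].
  { intros c _. apply derivable_pt_lim_sin. }
  rewrite Hc. replace (a + b - a) with b by ring.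
  generalize (Rabs_cos_le_1 c) (Rabs_pos b). nra.
Qed.

Lemma Rabs_cos_sub_le a b : Rabs (cos (a + b) - cos a) <= Rabs b.
Proof.
  destruct (MVT_abs cos (fun x => - sin x) a (a + b)) as [c [Hc _]].
  { intros c _. apply derivable_pt_lim_cos. }
  rewrite Hc, Rabs_Ropp. replace (a + b - a) with b by ring.
  generalize (Rabs_sin_le_1 c) (Rabs_pos b). nra.
Qed.

Lemma Rabs_le_of_between c b : Rmin 0 b <= c <= Rmax 0 b -> Rabs c <= Rabs b.
Proof.
  unfold Rmin, Rmax. destruct (Rle_dec 0 b); intros.
  - rewrite !Rabs_pos_eq; lra.
  - rewrite !Rabs_left1; lra.
Qed.

Lemma Rabs_cos_taylor_le a b : Rabs (cos (a + b) - cos a + b * sin a) <= b ^ 2.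
Proof.
  destruct (MVT_abs (fun t => cos (a + t) - cos a + t * sin a)
                    (fun t => - (sin (a + t) - sin a)) 0 b) as [c [Hc Hcb]].
  { intros c _. apply is_derive_Reals. auto_derive; auto. ring. }
  rewrite Rplus_0_r, Rmult_0_l, Rplus_0_r, Rminus_diag, !Rminus_0_r in Hc.
  rewrite Hc, Rabs_Ropp.
  generalize (Rabs_le_of_between c b Hcb) (Rabs_sin_sub_le a c) (Rabs_pos b) (Rabs_pos c).
  intros. rewrite <- (pow2_abs b). nra.
Qed.

Lemma Rabs_sin_taylor_le a b : Rabs (sin (a + b) - sin a - b * cos a) <= b ^ 2.
Proof.
  destruct (MVT_abs (fun t => sin (a + t) - sin a - t * cos a)
                    (fun t => cos (a + t) - cos a) 0 b) as [c [Hc Hcb]].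
  { intros c _. apply is_derive_Reals. auto_derive; auto. ring. }
  rewrite Rplus_0_r, Rmult_0_l, Rminus_diag, !Rminus_0_r in Hc.
  rewrite Hc.
  generalize (Rabs_le_of_between c b Hcb) (Rabs_cos_sub_le a c) (Rabs_pos b) (Rabs_pos c).
  intros. rewrite <- (pow2_abs b). nra.
Qed.

Lemma Rabs_sin_taylor_le_lin a b : Rabs (sin (a + b) - sin a - b * cos a) <= 2 * Rabs b.
Proof.
  eapply Rle_trans; [apply Rabs_triang |]. rewrite Rabs_Ropp, Rabs_mult.
  generalize (Rabs_sin_sub_le a b) (Rabs_cos_le_1 a) (Rabs_pos b). nra.
Qed.

Lemma Rabs_le_1_plus_sqr x : Rabs x <= 1 + x ^ 2.
Proof. destruct (Rle_dec 0 x); [rewrite Rabs_pos_eq | rewrite Rabs_left1]; nra. Qed.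

Lemma is_derive_of_remainder (F : R -> R) v l :
  (forall eps, 0 < eps -> exists delta, 0 < delta /\ forall h, Rabs h < delta ->
     Rabs (F (v + h) - F v - h * l) <= eps * Rabs h) -> is_derive F v l.
Proof.
  intros H. apply is_derive_Reals. intros eps Heps.
  destruct (H (eps / 2)) as [d [Hd Hh]]; [lra |].
  exists (mkposreal d Hd). intros h Hh0 Hhd. simpl in Hhd.
  specialize (Hh h Hhd).
  replace ((F (v + h) - F v) / h - l) with ((F (v + h) - F v - h * l) / h) by (field; auto).
  unfold Rdiv. rewrite Rabs_mult, Rabs_inv.
  assert (0 < Rabs h) by (apply Rabs_pos_lt; auto).
  apply Rle_lt_trans with (eps / 2 * Rabs h * / Rabs h).
  - apply Rmult_le_compat_r; [left; apply Rinv_0_lt_compat |]; auto.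
  - field_simplify; lra.
Qed.

Section DifferentiationUnderIntegral.

Variable p : R.
Hypothesis p_gt1 : 1 < p.

Lemma IntR_remainder a b c Ka Kb Kc h :
  dominated p Ka a -> dominated p Kb b -> dominated p Kc c ->
  IntR a - IntR b - h * IntR c = IntR (fun x => a x - b x - h * c x).
Proof.
  intros Ha Hb Hc.
  rewrite (IntR_ext (fun x => a x - b x - h * c x) (fun x => a x + (-1) * b x + (- h) * c x))
    by (intros; ring).
  assert (Hb' := dominated_scal p b (-1) Kb Hb).
  rewrite (IntR_plus p p_gt1 _ _ _ _ (dominated_plus p a _ _ _ Ha Hb') (dominated_scal p c (- h) Kc Hc)).
  rewrite (IntR_plus p p_gt1 _ _ _ _ Ha Hb'), (IntR_scal p p_gt1 b (-1) Kb Hb),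
    (IntR_scal p p_gt1 c (- h) Kc Hc).
  ring.
Qed.

Lemma abs_IntR_le_local e M L A : dominated p M e -> 0 <= A ->
  (forall x, - A <= x <= A -> Rabs (e x) <= L) ->
  Rabs (IntR e) <= 2 * M * weight_tail p A + 2 * A * L.
Proof.
  intros He HA HL.
  assert (Hin : Rabs (RInt e (- A) A) <= (A - - A) * L).
  { apply abs_RInt_le_const; [lra | apply ex_RInt_R, He | auto]. }
  generalize (IntR_window_approx p p_gt1 e M He A HA).
  replace (IntR e) with ((IntR e - RInt e (- A) A) + RInt e (- A) A) at 2 by ring.
  generalize (Rabs_triang (IntR e - RInt e (- A) A) (RInt e (- A) A)). lra.
Qed.

Variables (f : R -> R) (K : R).
Hypothesis f_cont : forall x, continuous f x.
Hypothesis f_moment2 : forall x, (1 + x ^ 2) * Rabs (f x) <= K * weight p x.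

Definition FT_re_d1 (f : R -> R) (v : R) : R := IntR (fun x => - (x * f x * sin (x * v))).
Definition FT_re_d2 (f : R -> R) (v : R) : R := IntR (fun x => - (x ^ 2 * f x * cos (x * v))).

Lemma weighted_bound_0 x : Rabs (f x) <= K * weight p x.
Proof. eapply Rle_trans; [| apply f_moment2]. generalize (Rabs_pos (f x)). nra. Qed.

Lemma weighted_bound_1 x : Rabs x * Rabs (f x) <= K * weight p x.
Proof.
  eapply Rle_trans; [| apply f_moment2].
  generalize (Rabs_pos (f x)) (Rabs_le_1_plus_sqr x). nra.
Qed.

Lemma weighted_bound_2 x : x ^ 2 * Rabs (f x) <= K * weight p x.
Proof. eapply Rle_trans; [| apply f_moment2]. generalize (Rabs_pos (f x)). nra. Qed.

Lemma f_dominated : dominated p K f.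
Proof. split; [apply f_cont | apply weighted_bound_0]. Qed.

Lemma dominated_mul_cos v : dominated p K (fun x => f x * cos (x * v)).
Proof.
  apply dominated_mult_bounded; [apply f_dominated | intros; auto_continuous |].
  intros; apply Rabs_cos_le_1.
Qed.

Lemma dominated_mul_sin v : dominated p K (fun x => f x * sin (x * v)).
Proof.
  apply dominated_mult_bounded; [apply f_dominated | intros; auto_continuous |].
  intros; apply Rabs_sin_le_1.
Qed.

Lemma dominated_d1 v : dominated p K (fun x => - (x * f x * sin (x * v))).
Proof.
  split; [intros x; auto_continuous |].
  intros x. rewrite Rabs_Ropp, !Rabs_mult. eapply Rle_trans; [| apply weighted_bound_1].
  generalize (Rabs_sin_le_1 (x * v)) (Rmult_le_pos _ _ (Rabs_pos x) (Rabs_pos (f x))). nra.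
Qed.

Lemma dominated_d2 v : dominated p K (fun x => - (x ^ 2 * f x * cos (x * v))).
Proof.
  split; [intros x; auto_continuous |].
  intros x. rewrite Rabs_Ropp, !Rabs_mult, (Rabs_pos_eq (x ^ 2)) by nra.
  eapply Rle_trans; [| apply weighted_bound_2].
  generalize (Rabs_cos_le_1 (x * v)) (Rmult_le_pos _ _ (pow2_ge_0 x) (Rabs_pos (f x))). nra.
Qed.

Lemma is_derive_FT_re v : is_derive (FT_re f) v (FT_re_d1 f v).
Proof.
  apply is_derive_of_remainder. intros eps Heps.
  set (B := 2 * K * weight_tail p 0).
  assert (HB : 0 <= B).
  { assert (0 <= K) by apply (dominated_K_nonneg p K f f_dominated).
    assert (0 <= weight_tail p 0) by (apply weight_tail_nonneg; lra). unfold B. nra. }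
  exists (eps / (B + 1)). split; [apply Rdiv_lt_0_compat; lra |].
  intros h Hh.
  change (Rabs (IntR (fun x => f x * cos (x * (v + h))) - IntR (fun x => f x * cos (x * v))
     - h * FT_re_d1 f v) <= eps * Rabs h).
  unfold FT_re_d1.
  rewrite (IntR_remainder _ _ _ K K K h (dominated_mul_cos (v + h)) (dominated_mul_cos v) (dominated_d1 v)).
  set (e := fun x => _).
  assert (Ee : forall x, e x = f x * (cos (x * v + x * h) - cos (x * v) + (x * h) * sin (x * v))).
  { intros x. unfold e. replace (x * (v + h)) with (x * v + x * h) by ring. ring. }
  assert (He : dominated p (h ^ 2 * K) e).
  { split; [intros x; unfold e; auto_continuous |].
    intros x. rewrite Ee, Rabs_mult.
    generalize (Rabs_cos_taylor_le (x * v) (x * h)) (Rabs_pos (f x)) (weighted_bound_2 x).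
    intros. apply Rle_trans with (h ^ 2 * (x ^ 2 * Rabs (f x))); [| rewrite Rmult_assoc]; nra. }
  eapply Rle_trans; [apply (abs_IntR_le p p_gt1 e _ He) |].
  assert (Rabs h * B <= eps).
  { apply Rle_trans with (eps / (B + 1) * (B + 1)).
    - generalize (Rabs_pos h). nra.
    - right; field; lra. }
  rewrite <- (pow2_abs h). unfold B in *. generalize (Rabs_pos h). nra.
Qed.

(* The remainder of the first order expansion of [FT_re_d1] at [v] with step [h]:
   globally it is O(|h|), on a window [-A, A] it is O(h^2). *)
Let d1_remainder v h x := - (x * f x) * (sin (x * v + x * h) - sin (x * v) - (x * h) * cos (x * v)).

Lemma d1_remainder_global v h x : Rabs (d1_remainder v h x) <= 2 * Rabs h * K * weight p x.
Proof.
  unfold d1_remainder. rewrite Rabs_mult, Rabs_Ropp, Rabs_mult.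
  generalize (Rabs_sin_taylor_le_lin (x * v) (x * h)). rewrite Rabs_mult. intros Hs.
  assert (Hxf : 0 <= Rabs x * Rabs (f x)) by (apply Rmult_le_pos; apply Rabs_pos).
  apply Rle_trans with (Rabs x * Rabs (f x) * (2 * (Rabs x * Rabs h))); [nra |].
  generalize (Rabs_pos h) (weighted_bound_2 x). rewrite <- (pow2_abs x). nra.
Qed.

Lemma d1_remainder_local v h A x : - A <= x <= A -> Rabs (d1_remainder v h x) <= A * h ^ 2 * K.
Proof.
  intros Hx. unfold d1_remainder. rewrite Rabs_mult, Rabs_Ropp, Rabs_mult.
  assert (Rabs x <= A) by (apply Rabs_le; lra).
  generalize (Rabs_sin_taylor_le (x * v) (x * h)) (Rabs_pos x) (Rabs_pos (f x))
    (weighted_bound_2 x) (weight_le_1 p p_gt1 x).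
  intros. assert (HK := dominated_K_nonneg p K f f_dominated).
  assert (x ^ 2 * Rabs (f x) <= K) by nra.
  apply Rle_trans with (Rabs x * Rabs (f x) * (x * h) ^ 2); [apply Rmult_le_compat_l; nra |].
  replace (Rabs x * Rabs (f x) * (x * h) ^ 2) with (Rabs x * h ^ 2 * (x ^ 2 * Rabs (f x))) by ring.
  assert (0 <= h ^ 2) by nra. assert (0 <= x ^ 2 * Rabs (f x)) by nra.
  apply Rle_trans with (A * h ^ 2 * (x ^ 2 * Rabs (f x))).
  - apply Rmult_le_compat_r; [| apply Rmult_le_compat_r]; lra.
  - apply Rmult_le_compat_l; nra.
Qed.

Lemma is_derive_FT_re_d1 v : is_derive (FT_re_d1 f) v (FT_re_d2 f v).
Proof.
  apply is_derive_of_remainder. intros eps Heps.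
  assert (HK : 0 <= K) by apply (dominated_K_nonneg p K f f_dominated).
  destruct (weight_tail_eventually_small p p_gt1 (4 * K) (eps / 2) ltac:(lra) ltac:(lra))
    as [A [HA HAB]].
  specialize (HAB A (Rle_refl A)).
  set (C := 2 * A * A * K).
  assert (HC : 0 <= C) by (unfold C; nra).
  exists (eps / (2 * (C + 1))). split; [apply Rdiv_lt_0_compat; lra |].
  intros h Hh.
  unfold FT_re_d1 at 1 2, FT_re_d2.
  rewrite (IntR_remainder _ _ _ K K K h (dominated_d1 (v + h)) (dominated_d1 v) (dominated_d2 v)).
  rewrite (IntR_ext _ (d1_remainder v h)).
  2:{ intros x. unfold d1_remainder. replace (x * (v + h)) with (x * v + x * h) by ring. ring. }
  assert (He : dominated p (2 * Rabs h * K) (d1_remainder v h)).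
  { split; [intros x; unfold d1_remainder; auto_continuous | apply d1_remainder_global]. }
  eapply Rle_trans; [apply (abs_IntR_le_local _ _ _ A He HA (d1_remainder_local v h A)) |].
  assert (Hh2 : Rabs h * C <= eps / 2).
  { apply Rle_trans with (eps / (2 * (C + 1)) * (C + 1)).
    - apply Rmult_le_compat; [apply Rabs_pos | lra | lra | lra].
    - right; field; lra. }
  rewrite <- (pow2_abs h). generalize (Rabs_pos h). unfold C in Hh2. nra.
Qed.

End DifferentiationUnderIntegral.

Definition cos_mode (u0 : R) (m : nat) (u : R) : R := cos (2 * PI * INR m * (u - u0)).

Lemma cos_mode_continuous u0 m x : continuous (cos_mode u0 m) x.
Proof. unfold cos_mode. auto_continuous. Qed.

Lemma cos_mode_periodic u0 m x n : cos_mode u0 m (x + INR n) = cos_mode u0 m x.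
Proof.
  unfold cos_mode.
  replace (2 * PI * INR m * (x + INR n - u0))
    with (2 * PI * INR m * (x - u0) + 2 * INR (m * n) * PI) by (rewrite mult_INR; ring).
  apply cos_period.
Qed.

Lemma cos_mode_le_1 u0 m x : Rabs (cos_mode u0 m x) <= 1.
Proof. apply Rabs_cos_le_1. Qed.

(* [match m with O => 1%nat | S k => k end] is |m - 1| *)
Lemma cos_mode_1_mul u0 m u : cos_mode u0 1 u * cos_mode u0 m u =
  / 2 * cos_mode u0 (S m) u + / 2 * cos_mode u0 (match m with O => 1%nat | S k => k end) u.
Proof.
  unfold cos_mode. destruct m as [|k].
  - replace (2 * PI * INR 0 * (u - u0)) with 0 by (simpl; ring).
    rewrite cos_0. field.
  - set (t := 2 * PI * (u - u0)).
    replace (2 * PI * INR 1 * (u - u0)) with t by (unfold t; simpl; ring).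
    replace (2 * PI * INR (S (S k)) * (u - u0)) with (INR (S k) * t + t) by (unfold t; rewrite !S_INR; ring).
    replace (2 * PI * INR (S k) * (u - u0)) with (INR (S k) * t) by (unfold t; ring).
    replace (2 * PI * INR k * (u - u0)) with (INR (S k) * t - t) by (unfold t; rewrite S_INR; ring).
    rewrite cos_plus, cos_minus. field.
Qed.

Lemma sin_INR_mult_PI m : sin (INR m * PI) = 0.
Proof.
  induction m as [|m IH].
  - simpl. rewrite Rmult_0_l. apply sin_0.
  - rewrite S_INR. replace ((INR m + 1) * PI) with (INR m * PI + PI) by ring.
    rewrite neg_sin, IH. ring.
Qed.

Lemma RInt_cos_mode u0 m :
  RInt (cos_mode u0 m) (u0 - / 2) (u0 + / 2) = match m with O => 1 | S _ => 0 end.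
Proof.
  destruct m as [|k].
  - rewrite (RInt_ext_R _ (fun _ => 1)).
    + rewrite RInt_const. unfold scal; simpl; unfold mult; simpl. field.
    + intros x. unfold cos_mode. simpl. rewrite Rmult_0_r, Rmult_0_l. apply cos_0.
  - set (c := 2 * PI * INR (S k)).
    assert (Hc : 0 < c).
    { unfold c. generalize PI_RGT_0 (lt_0_INR (S k) ltac:(lia)). nra. }
    apply is_RInt_unique.
    replace 0 with (minus ((fun u => sin (c * (u - u0)) / c) (u0 + / 2))
                          ((fun u => sin (c * (u - u0)) / c) (u0 - / 2))).
    + apply (@is_RInt_derive R_CompleteNormedModule (fun u => sin (c * (u - u0)) / c)).
      * intros x _. unfold cos_mode. fold c. auto_derive; auto. unfold Rminus. field. lra.
      * intros x _. apply cos_mode_continuous.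
    + unfold minus, plus, opp; simpl.
      replace (c * (u0 + / 2 - u0)) with (INR (S k) * PI) by (unfold c; field).
      replace (c * (u0 - / 2 - u0)) with (- (INR (S k) * PI)) by (unfold c; field).
      rewrite sin_neg, sin_INR_mult_PI. field. lra.
Qed.

Lemma pow_ge_bernoulli q n : 1 <= q -> 1 + INR n * (q - 1) <= q ^ n.
Proof.
  intros Hq. induction n as [|n IH]; [simpl; lra |].
  rewrite S_INR. simpl.
  assert (0 <= INR n) by apply pos_INR.
  assert (1 <= q ^ n) by (rewrite <- (pow1 n); apply pow_incr; lra).
  nra.
Qed.

Lemma cos_decreasing x y : 0 <= x -> x <= y -> y <= PI -> cos y <= cos x.
Proof.
  intros. destruct (Req_dec x y) as [->|]; [lra |].
  left. apply cos_decreasing_1; lra.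
Qed.

Lemma cos_Rabs t : cos t = cos (Rabs t).
Proof.
  destruct (Rle_dec 0 t); [rewrite Rabs_pos_eq | rewrite Rabs_left1, cos_neg]; auto; lra.
Qed.

Lemma PI_gt_3 : 3 < PI.
Proof. generalize PI2_3_2. lra. Qed.

(* The kernel [kappa + cos (2 pi (u - u0))] exceeds 1 only on [|u - u0| < d]. *)
Section PeakKernel.

Variables (u0 d : R).
Hypothesis d_pos : 0 < d.
Hypothesis d_le : d <= / 4.

Definition kappa := 1 - cos (2 * PI * d).
Definition peak_kernel (u : R) : R := kappa + cos (2 * PI * (u - u0)).
Definition peak_height := kappa + cos (PI * d).

Lemma peak_kernel_continuous x : continuous peak_kernel x.
Proof. unfold peak_kernel. auto_continuous. Qed.

Lemma cos_2PI_Rabs u : cos (2 * PI * (u - u0)) = cos (2 * PI * Rabs (u - u0)).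
Proof. rewrite cos_Rabs, Rabs_mult, (Rabs_pos_eq (2 * PI)); [reflexivity | generalize PI_RGT_0; lra]. Qed.

Lemma peak_kernel_far u : d <= Rabs (u - u0) <= / 2 -> Rabs (peak_kernel u) <= 1.
Proof.
  intros Hu. unfold peak_kernel, kappa. rewrite cos_2PI_Rabs.
  assert (cos (2 * PI * Rabs (u - u0)) <= cos (2 * PI * d)) by (apply cos_decreasing; generalize PI_gt_3; nra).
  generalize (COS_bound (2 * PI * Rabs (u - u0))) (COS_bound (2 * PI * d)). intros.
  apply Rabs_le. lra.
Qed.

Lemma peak_kernel_near u : Rabs (u - u0) <= d -> 1 <= peak_kernel u.
Proof.
  intros Hu. unfold peak_kernel, kappa. rewrite cos_2PI_Rabs.
  assert (cos (2 * PI * d) <= cos (2 * PI * Rabs (u - u0))).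
  { apply cos_decreasing; generalize (Rabs_pos (u - u0)) PI_gt_3; nra. }
  lra.
Qed.

Lemma peak_kernel_center u : Rabs (u - u0) <= d / 2 -> peak_height <= peak_kernel u.
Proof.
  intros Hu. unfold peak_kernel, peak_height. rewrite cos_2PI_Rabs.
  assert (cos (PI * d) <= cos (2 * PI * Rabs (u - u0))).
  { apply cos_decreasing; generalize (Rabs_pos (u - u0)) PI_gt_3; nra. }
  lra.
Qed.

Lemma peak_height_gt_1 : 1 < peak_height.
Proof.
  unfold peak_height, kappa.
  assert (cos (2 * PI * d) < cos (PI * d)) by (apply cos_decreasing_1; generalize PI_gt_3; nra).
  lra.
Qed.

Variable f : R -> R.
Hypothesis f_cont : forall x, continuous f x.
Hypothesis f_near : forall u, Rabs (u - u0) <= d -> f u0 / 2 < f u.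

Let g n u := f u * peak_kernel u ^ n.

Lemma g_continuous n x : continuous (g n) x.
Proof. unfold g. auto_continuous. apply peak_kernel_continuous. Qed.

Lemma RInt_peak_side_lower n a b : a <= b ->
  (forall x, a <= x <= b -> d <= Rabs (x - u0) <= / 2) ->
  - RInt (fun u => Rabs (f u)) a b <= RInt (g n) a b.
Proof.
  intros Hab Hfar.
  assert (Rabs (RInt (g n) a b) <= RInt (fun u => Rabs (f u)) a b).
  { apply abs_RInt_le_R; [apply g_continuous | auto | intros; apply continuous_Rabs_comp; auto |].
    intros x Hx. unfold g. rewrite Rabs_mult, <- RPow_abs.
    assert (Rabs (peak_kernel x) ^ n <= 1).
    { rewrite <- (pow1 n). apply pow_incr. split; [apply Rabs_pos | apply peak_kernel_far; auto]. }
    generalize (Rabs_pos (f x)) (pow_le (Rabs (peak_kernel x)) n (Rabs_pos _)). nra. }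
  generalize (Rle_abs (- RInt (g n) a b)). rewrite Rabs_Ropp. lra.
Qed.

Lemma RInt_peak_lower n :
  d * (f u0 / 2) * peak_height ^ n
    - (RInt (fun u => Rabs (f u)) (u0 - / 2) (u0 - d) + RInt (fun u => Rabs (f u)) (u0 + d) (u0 + / 2))
  <= RInt (g n) (u0 - / 2) (u0 + / 2).
Proof.
  assert (Hg := g_continuous n).
  replace (RInt (g n) (u0 - / 2) (u0 + / 2)) with
    (RInt (g n) (u0 - / 2) (u0 - d) + RInt (g n) (u0 - d) (u0 - d / 2)
     + RInt (g n) (u0 - d / 2) (u0 + d / 2) + RInt (g n) (u0 + d / 2) (u0 + d)
     + RInt (g n) (u0 + d) (u0 + / 2)) by (rewrite !RInt_Chasles_R; auto).
  assert (A1 := RInt_peak_side_lower n (u0 - / 2) (u0 - d) ltac:(lra)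
    ltac:(intros x Hx; rewrite Rabs_left1; lra)).
  assert (A5 := RInt_peak_side_lower n (u0 + d) (u0 + / 2) ltac:(lra)
    ltac:(intros x Hx; rewrite Rabs_pos_eq; lra)).
  assert (Hnn : forall x, Rabs (x - u0) <= d -> 0 <= g n x).
  { intros x Hx. unfold g. apply Rmult_le_pos.
    - generalize (f_near x Hx) (f_near u0 ltac:(rewrite Rminus_diag, Rabs_R0; lra)). lra.
    - apply pow_le. generalize (peak_kernel_near x Hx). lra. }
  assert (A2 : 0 <= RInt (g n) (u0 - d) (u0 - d / 2)).
  { apply RInt_ge_0; [lra | apply ex_RInt_R, Hg |].
    intros x Hx. apply Hnn. rewrite Rabs_left1; lra. }
  assert (A4 : 0 <= RInt (g n) (u0 + d / 2) (u0 + d)).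
  { apply RInt_ge_0; [lra | apply ex_RInt_R, Hg |].
    intros x Hx. apply Hnn. rewrite Rabs_pos_eq; lra. }
  assert (A3 : (u0 + d / 2 - (u0 - d / 2)) * (f u0 / 2 * peak_height ^ n)
               <= RInt (g n) (u0 - d / 2) (u0 + d / 2)).
  { apply RInt_ge_const; [apply Hg | lra |].
    intros x Hx. unfold g.
    assert (Hx2 : Rabs (x - u0) <= d / 2) by (apply Rabs_le; lra).
    generalize (f_near x ltac:(lra)) (f_near u0 ltac:(rewrite Rminus_diag, Rabs_R0; lra))
      (peak_kernel_center x Hx2) peak_height_gt_1. intros.
    assert (peak_height ^ n <= peak_kernel x ^ n) by (apply pow_incr; lra).
    assert (0 <= peak_height ^ n) by (apply pow_le; lra).
    apply Rmult_le_compat; lra. }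
  replace (u0 + d / 2 - (u0 - d / 2)) with d in A3 by field.
  lra.
Qed.

End PeakKernel.

Section FourierUniqueness.

Variables (f : R -> R) (u0 : R).
Hypothesis f_cont : forall x, continuous f x.
Hypothesis f_coef : forall m, RInt (fun u => f u * cos_mode u0 m u) (u0 - / 2) (u0 + / 2) = 0.

Lemma RInt_kernel_pow_cos_mode kap n m :
  RInt (fun u => f u * (kap + cos_mode u0 1 u) ^ n * cos_mode u0 m u) (u0 - / 2) (u0 + / 2) = 0.
Proof.
  revert m. induction n as [|n IH]; intros m.
  - rewrite <- (f_coef m). apply RInt_ext_R. intros; simpl; ring.
  - set (m' := match m with O => 1%nat | S k => k end).
    set (F k u := f u * (kap + cos_mode u0 1 u) ^ n * cos_mode u0 k u).
    assert (HF : forall k x, continuous (F k) x).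
    { intros k x. unfold F. auto_continuous; apply cos_mode_continuous. }
    rewrite (RInt_ext_R _ (fun u => kap * F m u + (/ 2 * F (S m) u + / 2 * F m' u))).
    2:{ intros u. unfold F, m'. simpl.
        transitivity (f u * (kap + cos_mode u0 1 u) ^ n
          * (kap * cos_mode u0 m u + cos_mode u0 1 u * cos_mode u0 m u)); [ring |].
        rewrite cos_mode_1_mul. ring. }
    rewrite (RInt_plus (V := R_CompleteNormedModule)), (RInt_plus (V := R_CompleteNormedModule)).
    + rewrite !RInt_scal_R by apply HF. unfold F. rewrite !IH. unfold plus; simpl. ring.
    + apply ex_RInt_R. intros; auto_continuous.
    + apply ex_RInt_R. intros; auto_continuous.
    + apply ex_RInt_R. intros; auto_continuous.
    + apply ex_RInt_R. intros; auto_continuous.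
Qed.

Lemma fourier_coef_zero_not_pos : ~ (0 < f u0).
Proof.
  intros Hpos.
  destruct (continuous_R_eps f u0 (f u0 / 2) (f_cont u0)) as [d0 [Hd0 Hd0f]]; [lra |].
  set (d := Rmin (d0 / 2) (/ 4)).
  assert (Hd : 0 < d) by (unfold d; apply Rmin_glb_lt; lra).
  assert (Hd4 : d <= / 4) by (unfold d; apply Rmin_r).
  assert (Hdd0 : d < d0) by (unfold d; generalize (Rmin_l (d0 / 2) (/ 4)); lra).
  assert (Hfnear : forall u, Rabs (u - u0) <= d -> f u0 / 2 < f u).
  { intros u Hu. specialize (Hd0f u ltac:(lra)). apply Rabs_def2 in Hd0f. lra. }
  set (q := peak_height d).
  set (B := RInt (fun u => Rabs (f u)) (u0 - / 2) (u0 - d) + RInt (fun u => Rabs (f u)) (u0 + d) (u0 + / 2)).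
  assert (Hbd : forall n, d * (f u0 / 2) * q ^ n <= B).
  { intros n.
    generalize (RInt_peak_lower u0 d Hd Hd4 f f_cont Hfnear n).
    rewrite (RInt_ext_R (fun u => f u * peak_kernel u0 d u ^ n)
      (fun u => f u * (kappa d + cos_mode u0 1 u) ^ n * cos_mode u0 0 u)).
    - rewrite RInt_kernel_pow_cos_mode. fold q B. lra.
    - intros u. unfold peak_kernel, cos_mode. simpl.
      rewrite Rmult_0_r, Rmult_0_l, cos_0, !Rmult_1_r. reflexivity. }
  assert (Hq : 1 < q) by apply (peak_height_gt_1 d Hd Hd4).
  set (c := d * (f u0 / 2)).
  assert (Hc : 0 < c) by (unfold c; nra).
  destruct (INR_unbounded (B / (c * (q - 1)))) as [n Hn].
  specialize (Hbd n). fold c in Hbd.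
  generalize (pow_ge_bernoulli q n ltac:(lra)) (pos_INR n). intros.
  apply Rmult_lt_compat_r with (r := c * (q - 1)) in Hn; [| nra].
  replace (B / (c * (q - 1)) * (c * (q - 1))) with B in Hn by (field; nra).
  nra.
Qed.

End FourierUniqueness.

Lemma fourier_coef_zero (f : R -> R) u0 : (forall x, continuous f x) ->
  (forall m, RInt (fun u => f u * cos_mode u0 m u) (u0 - / 2) (u0 + / 2) = 0) -> f u0 = 0.
Proof.
  intros Hc Hco.
  destruct (Rtotal_order (f u0) 0) as [Hl|[He|Hg]]; auto; exfalso.
  - apply (fourier_coef_zero_not_pos (fun x => - f x) u0).
    + intros; auto_continuous.
    + intros m. rewrite (RInt_ext_R _ (fun u => (-1) * (f u * cos_mode u0 m u))) by (intros; ring).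
      rewrite RInt_scal_R, Hco; [apply Rmult_0_r |].
      intros x. apply continuous_R_mult; [auto | apply cos_mode_continuous].
    + lra.
  - apply (fourier_coef_zero_not_pos f u0); auto.
Qed.

Section WeightedSeries.

Variable p : R.
Hypothesis p_gt1 : 1 < p.

Lemma weight_le_tail_diff s : 1 <= s -> weight p s <= weight_tail p (s - 1) - weight_tail p s.
Proof.
  intros Hs.
  rewrite <- (is_RInt_unique _ _ _ _ (is_RInt_weight p p_gt1 (s - 1) s ltac:(lra))).
  replace (weight p s) with ((s - (s - 1)) * weight p s) by ring.
  apply RInt_ge_const; [apply weight_continuous | lra |].
  intros x Hx. apply (weight_decreasing p p_gt1). lra.
Qed.

Variables (a : nat -> R) (K c : R).
Hypothesis a_bound : forall n, c <= INR n -> Rabs (a n) <= K * weight p (INR n - c).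

Lemma series_K_nonneg : 0 <= K.
Proof.
  destruct (INR_unbounded c) as [n Hn].
  generalize (a_bound n ltac:(lra)) (weight_pos p (INR n - c)) (Rabs_pos (a n)). nra.
Qed.

Lemma abs_sum_n_m_le_shift k : forall n, 1 <= INR n - c ->
  Rabs (sum_n_m a n (n + k)) <= K * (weight_tail p (INR n - 1 - c) - weight_tail p (INR (n + k) - c)).
Proof.
  assert (Hstep : forall n, 1 <= INR n - c ->
    Rabs (a n) <= K * (weight_tail p (INR n - 1 - c) - weight_tail p (INR n - c))).
  { intros n Hn. eapply Rle_trans; [apply a_bound; lra |].
    apply Rmult_le_compat_l; [apply series_K_nonneg |].
    replace (INR n - 1 - c) with ((INR n - c) - 1) by ring. apply weight_le_tail_diff. lra. }
  induction k as [|k IH]; intros n Hn.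
  - rewrite Nat.add_0_r, sum_n_n. auto.
  - rewrite Nat.add_succ_r, sum_n_Sm by lia.
    change (plus (sum_n_m a n (n + k)) (a (S (n + k)))) with (sum_n_m a n (n + k) + a (S (n + k))).
    eapply Rle_trans; [apply Rabs_triang |].
    assert (INR n <= INR (n + k)) by (apply le_INR; lia).
    generalize (IH n Hn) (Hstep (S (n + k)) ltac:(rewrite S_INR; lra)).
    rewrite S_INR. replace (INR (n + k) + 1 - 1 - c) with (INR (n + k) - c) by ring.
    lra.
Qed.

Lemma abs_sum_n_m_le n m : 1 <= INR n - c ->
  Rabs (sum_n_m a n m) <= K * weight_tail p (INR n - 1 - c).
Proof.
  intros Hn. assert (HK := series_K_nonneg). destruct (le_lt_dec n m) as [Hnm|Hnm].
  - replace m with (n + (m - n))%nat by lia.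
    eapply Rle_trans; [apply abs_sum_n_m_le_shift; auto |].
    assert (INR n <= INR (n + (m - n))) by (apply le_INR; lia).
    assert (0 <= weight_tail p (INR (n + (m - n)) - c)) by (apply weight_tail_nonneg; lra).
    nra.
  - rewrite sum_n_m_zero by lia. unfold zero; simpl. rewrite Rabs_R0.
    apply Rmult_le_pos; [auto | apply weight_tail_nonneg; lra].
Qed.

Lemma ex_series_weighted : ex_series a.
Proof.
  apply (@ex_series_Cauchy R_AbsRing R_CompleteNormedModule). intros eps.
  destruct (weight_tail_eventually_small p p_gt1 K eps series_K_nonneg (cond_pos eps))
    as [A [HA HB]].
  destruct (INR_unbounded (A + 1 + c + 1)) as [N HN].
  exists N. intros n m Hn Hm.
  assert (INR N <= INR n) by (apply le_INR; lia).
  eapply Rle_lt_trans; [apply abs_sum_n_m_le; lra |].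
  apply HB. lra.
Qed.

Lemma abs_Series_sub_sum_le N : c <= INR N ->
  Rabs (Series a - sum_n a N) <= K * weight_tail p (INR N - c).
Proof.
  intros HN.
  assert (Hl : is_lim_seq (fun M => Rabs (sum_n a M - sum_n a N)) (Rabs (Series a - sum_n a N))).
  { apply (is_lim_seq_abs _ (Finite (Series a - sum_n a N))).
    apply (is_lim_seq_minus' _ _ (Series a)); [apply Series_correct, ex_series_weighted |].
    apply is_lim_seq_const. }
  assert (Hev : eventually (fun M => Rabs (sum_n a M - sum_n a N) <= K * weight_tail p (INR N - c))).
  { exists (S N). intros M HM.
    assert (E : sum_n a M - sum_n a N = sum_n_m a (S N) M)
      by (symmetry; apply (sum_n_m_sum_n (G := R_AbelianGroup)); lia).
    rewrite E. replace (INR N - c) with (INR (S N) - 1 - c) by (rewrite S_INR; ring).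
    apply abs_sum_n_m_le. rewrite S_INR. lra. }
  exact (is_lim_seq_le_loc _ _ _ _ Hev Hl (is_lim_seq_const _)).
Qed.

End WeightedSeries.

Section Periodization.

Variable p : R.
Hypothesis p_gt1 : 1 < p.
Variables (g : R -> R) (K : R).
Hypothesis g_dom : dominated p K g.

Let g_cont : forall x, continuous g x := proj1 g_dom.
Let K_nonneg : 0 <= K := dominated_K_nonneg p K g g_dom.

(* [sum_{k in Z} g (u - k)], split into [k >= 0] and [k = -n-1 < 0] *)
Definition left_terms u n := g (u - INR n).
Definition right_terms u n := g (u + INR n + 1).
Definition periodization u := Series (left_terms u) + Series (right_terms u).
Definition periodization_partial N u := sum_n (left_terms u) N + sum_n (right_terms u) N.

Lemma left_terms_bound Rb u : Rabs u <= Rb -> forall n, Rb <= INR n ->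
  Rabs (left_terms u n) <= K * weight p (INR n - Rb).
Proof.
  intros Hu n Hn. unfold left_terms.
  eapply Rle_trans; [apply g_dom |]. apply Rmult_le_compat_l; auto.
  rewrite <- weight_Rabs. apply (weight_decreasing p p_gt1).
  split; [lra |]. rewrite Rabs_minus_sym.
  generalize (Rabs_triang_inv (INR n) u). rewrite (Rabs_pos_eq (INR n)) by apply pos_INR. lra.
Qed.

Lemma right_terms_bound Rb u : Rabs u <= Rb -> forall n, Rb <= INR n ->
  Rabs (right_terms u n) <= K * weight p (INR n - Rb).
Proof.
  intros Hu n Hn. unfold right_terms.
  eapply Rle_trans; [apply g_dom |]. apply Rmult_le_compat_l; auto.
  rewrite <- weight_Rabs. apply (weight_decreasing p p_gt1).
  split; [lra |]. replace (u + INR n + 1) with ((INR n + 1) - - u) by ring.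
  generalize (Rabs_triang_inv (INR n + 1) (- u)). rewrite Rabs_Ropp.
  rewrite (Rabs_pos_eq (INR n + 1)) by (generalize (pos_INR n); lra). lra.
Qed.

Lemma ex_series_left_terms u : ex_series (left_terms u).
Proof. apply (ex_series_weighted p p_gt1 _ K (Rabs u)); apply left_terms_bound; lra. Qed.

Lemma ex_series_right_terms u : ex_series (right_terms u).
Proof. apply (ex_series_weighted p p_gt1 _ K (Rabs u)); apply right_terms_bound; lra. Qed.

Lemma periodization_approx Rb u N : Rabs u <= Rb -> Rb <= INR N ->
  Rabs (periodization u - periodization_partial N u) <= 2 * K * weight_tail p (INR N - Rb).
Proof.
  intros Hu HN.
  generalize (abs_Series_sub_sum_le p p_gt1 _ K Rb (left_terms_bound Rb u Hu) N HN)
             (abs_Series_sub_sum_le p p_gt1 _ K Rb (right_terms_bound Rb u Hu) N HN).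
  unfold periodization, periodization_partial.
  replace (Series (left_terms u) + Series (right_terms u) - (sum_n (left_terms u) N + sum_n (right_terms u) N))
    with ((Series (left_terms u) - sum_n (left_terms u) N) + (Series (right_terms u) - sum_n (right_terms u) N))
    by ring.
  generalize (Rabs_triang (Series (left_terms u) - sum_n (left_terms u) N)
    (Series (right_terms u) - sum_n (right_terms u) N)). lra.
Qed.

Lemma continuous_sum_n (F : nat -> R -> R) N x : (forall n, continuous (F n) x) ->
  continuous (fun u => sum_n (fun n => F n u) N) x.
Proof.
  intros H. induction N as [|N IH].
  - apply (continuous_ext (F 0%nat)); [intros; rewrite sum_O |]; auto.
  - apply (continuous_ext (fun u => sum_n (fun n => F n u) N + F (S N) u)).
    + intros; rewrite sum_Sn; auto.
    + apply continuous_R_plus; auto.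
Qed.

Lemma left_partial_continuous N x : continuous (fun u => sum_n (left_terms u) N) x.
Proof.
  apply (continuous_sum_n (fun n u => g (u - INR n))). intros n.
  apply (continuous_comp (fun u => u - INR n) g); [auto_continuous | apply g_cont].
Qed.

Lemma right_partial_continuous N x : continuous (fun u => sum_n (right_terms u) N) x.
Proof.
  apply (continuous_sum_n (fun n u => g (u + INR n + 1))). intros n.
  apply (continuous_comp (fun u => u + INR n + 1) g); [auto_continuous | apply g_cont].
Qed.

Lemma periodization_partial_continuous N x : continuous (periodization_partial N) x.
Proof.
  apply continuous_R_plus; [apply left_partial_continuous | apply right_partial_continuous].
Qed.

Lemma periodization_continuous x : continuous periodization x.
Proof.
  apply continuous_R_of_eps. intros eps He.
  set (Rb := Rabs x + 1).
  destruct (weight_tail_eventually_small p p_gt1 (2 * K) (eps / 3) ltac:(lra) ltac:(lra)) as [B [HB0 HB]].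
  destruct (INR_unbounded (B + Rb)) as [N HN].
  assert (HT : 2 * K * weight_tail p (INR N - Rb) < eps / 3) by (apply HB; lra).
  destruct (continuous_R_eps _ x (eps / 3) (periodization_partial_continuous N x)) as [d [Hd Hdd]]; [lra |].
  exists (Rmin d 1). split; [apply Rmin_glb_lt; lra |].
  intros y Hy.
  generalize (Rmin_l d 1) (Rmin_r d 1). intros.
  assert (Hyr : Rabs y <= Rb) by (unfold Rb; generalize (Rabs_triang_inv y x); lra).
  assert (Hxr : Rabs x <= Rb) by (unfold Rb; lra).
  assert (HRb : 0 <= Rb) by (unfold Rb; generalize (Rabs_pos x); lra).
  generalize (periodization_approx Rb y N Hyr ltac:(lra)) (periodization_approx Rb x N Hxr ltac:(lra))
    (Hdd y ltac:(lra)).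
  replace (periodization y - periodization x) with
    ((periodization y - periodization_partial N y) + (periodization_partial N y - periodization_partial N x)
     - (periodization x - periodization_partial N x)) by ring.
  generalize (Rabs_triang ((periodization y - periodization_partial N y)
      + (periodization_partial N y - periodization_partial N x)) (- (periodization x - periodization_partial N x)))
    (Rabs_triang (periodization y - periodization_partial N y) (periodization_partial N y - periodization_partial N x)).
  rewrite Rabs_Ropp. unfold Rminus in *. lra.
Qed.

Section PeriodicFactor.

Variable h : R -> R.
Hypothesis h_cont : forall x, continuous h x.
Hypothesis h_periodic : forall x n, h (x + INR n) = h x.
Hypothesis h_bound : forall x, Rabs (h x) <= 1.

Let gh x := g x * h x.

Lemma gh_continuous x : continuous gh x.
Proof. unfold gh. auto_continuous. Qed.

Lemma RInt_shift_left n a b :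
  RInt (fun u => g (u - INR n) * h u) a b = RInt gh (a - INR n) (b - INR n).
Proof.
  rewrite (RInt_ext_R _ (fun y => scal 1 (gh (1 * y + - INR n)))).
  - etransitivity; [apply (RInt_comp_lin (V := R_CompleteNormedModule) gh 1 (- INR n) a b) |].
    + apply ex_RInt_R, gh_continuous.
    + f_equal; ring.
  - intros y. unfold scal; simpl; unfold mult; simpl. unfold gh.
    replace (1 * y + - INR n) with (y - INR n) by ring.
    rewrite <- (h_periodic (y - INR n) n). replace (y - INR n + INR n) with y by ring. ring.
Qed.

Lemma RInt_shift_right n a b :
  RInt (fun u => g (u + INR n + 1) * h u) a b = RInt gh (a + INR n + 1) (b + INR n + 1).
Proof.
  rewrite (RInt_ext_R _ (fun y => scal 1 (gh (1 * y + (INR n + 1))))).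
  - etransitivity; [apply (RInt_comp_lin (V := R_CompleteNormedModule) gh 1 (INR n + 1) a b) |].
    + apply ex_RInt_R, gh_continuous.
    + f_equal; ring.
  - intros y. unfold scal; simpl; unfold mult; simpl. unfold gh.
    replace (1 * y + (INR n + 1)) with (y + INR n + 1) by ring.
    replace (y + INR n + 1) with (y + INR (S n)) by (rewrite S_INR; ring).
    rewrite (h_periodic y (S n)). ring.
Qed.

Lemma RInt_left_partial N a :
  RInt (fun u => sum_n (left_terms u) N * h u) a (a + 1) = RInt gh (a - INR N) (a + 1).
Proof.
  induction N as [|N IH].
  - rewrite (RInt_ext_R _ (fun u => g (u - INR 0) * h u)) by (intros; rewrite sum_O; reflexivity).
    rewrite RInt_shift_left, INR_0. f_equal; ring.
  - rewrite (RInt_ext_R _ (fun u => sum_n (left_terms u) N * h u + g (u - INR (S N)) * h u))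
      by (intros; rewrite sum_Sn; unfold plus, left_terms; simpl; ring).
    rewrite (RInt_plus (V := R_CompleteNormedModule)).
    + rewrite IH, RInt_shift_left, S_INR. unfold plus; simpl.
      replace (a + 1 - (INR N + 1)) with (a - INR N) by ring.
      rewrite Rplus_comm. apply RInt_Chasles_R, gh_continuous.
    + apply ex_RInt_R. intros; apply continuous_R_mult; [apply left_partial_continuous | auto].
    + apply ex_RInt_R. intros; apply continuous_R_mult; auto.
      apply (continuous_comp (fun u => u - INR (S N)) g); [auto_continuous | apply g_cont].
Qed.

Lemma RInt_right_partial N a :
  RInt (fun u => sum_n (right_terms u) N * h u) a (a + 1) = RInt gh (a + 1) (a + INR N + 2).
Proof.
  induction N as [|N IH].
  - rewrite (RInt_ext_R _ (fun u => g (u + INR 0 + 1) * h u)) by (intros; rewrite sum_O; reflexivity).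
    rewrite RInt_shift_right, INR_0. f_equal; ring.
  - rewrite (RInt_ext_R _ (fun u => sum_n (right_terms u) N * h u + g (u + INR (S N) + 1) * h u))
      by (intros; rewrite sum_Sn; unfold plus, right_terms; simpl; ring).
    rewrite (RInt_plus (V := R_CompleteNormedModule)).
    + rewrite IH, RInt_shift_right, S_INR. unfold plus; simpl.
      replace (a + (INR N + 1) + 1) with (a + INR N + 2) by ring.
      replace (a + 1 + (INR N + 1) + 1) with (a + (INR N + 1) + 2) by ring.
      apply RInt_Chasles_R, gh_continuous.
    + apply ex_RInt_R. intros; apply continuous_R_mult; [apply right_partial_continuous | auto].
    + apply ex_RInt_R. intros; apply continuous_R_mult; auto.
      apply (continuous_comp (fun u => u + INR (S N) + 1) g); [auto_continuous | apply g_cont].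
Qed.

Lemma RInt_periodization_partial N a :
  RInt (fun u => periodization_partial N u * h u) a (a + 1) = RInt gh (a - INR N) (a + INR N + 2).
Proof.
  unfold periodization_partial.
  rewrite (RInt_ext_R _ (fun u => sum_n (left_terms u) N * h u + sum_n (right_terms u) N * h u))
    by (intros; ring).
  rewrite (RInt_plus (V := R_CompleteNormedModule)).
  - rewrite RInt_left_partial, RInt_right_partial. apply RInt_Chasles_R, gh_continuous.
  - apply ex_RInt_R. intros; apply continuous_R_mult; [apply left_partial_continuous | auto].
  - apply ex_RInt_R. intros; apply continuous_R_mult; [apply right_partial_continuous | auto].
Qed.

Lemma abs_RInt_periodization_sub_partial N a Rb : Rabs a + 1 <= Rb -> Rb <= INR N ->
  Rabs (RInt (fun u => periodization u * h u) a (a + 1)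
        - RInt (fun u => periodization_partial N u * h u) a (a + 1))
  <= 2 * K * weight_tail p (INR N - Rb).
Proof.
  intros Ha HN.
  rewrite <- (RInt_minus (V := R_CompleteNormedModule)).
  - replace (2 * K * weight_tail p (INR N - Rb)) with ((a + 1 - a) * (2 * K * weight_tail p (INR N - Rb)))
      by ring.
    apply abs_RInt_le_const; [lra | |].
    + apply ex_RInt_R. intros; apply continuous_R_minus; apply continuous_R_mult; auto;
        [apply periodization_continuous | apply periodization_partial_continuous].
    + intros t Ht. unfold minus, plus, opp; simpl.
      replace (periodization t * h t + - (periodization_partial N t * h t))
        with ((periodization t - periodization_partial N t) * h t) by ring.
      rewrite Rabs_mult.
      assert (Rabs t <= Rb) by (apply Rabs_le; generalize (Rle_abs a) (Rle_abs (- a)); rewrite Rabs_Ropp; lra).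
      generalize (periodization_approx Rb t N ltac:(lra) HN) (h_bound t) (Rabs_pos (h t))
        (Rabs_pos (periodization t - periodization_partial N t)). nra.
  - apply ex_RInt_R. intros; apply continuous_R_mult; [apply periodization_continuous | auto].
  - apply ex_RInt_R. intros; apply continuous_R_mult; [apply periodization_partial_continuous | auto].
Qed.

Lemma RInt_periodization_mul a : RInt (fun u => periodization u * h u) a (a + 1) = IntR gh.
Proof.
  assert (gh_dom : dominated p K gh) by (apply dominated_mult_bounded; auto).
  apply Req_of_abs_lt_all. intros eps He.
  destruct (weight_tail_eventually_small p p_gt1 (2 * K) (eps / 3) ltac:(lra) ltac:(lra)) as [B [HB0 HB]].
  set (Rb := Rabs a + 1).
  destruct (INR_unbounded (B + Rb)) as [N HN].
  assert (HT : 2 * K * weight_tail p (INR N - Rb) < eps / 3) by (apply HB; lra).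
  set (A := INR N - Rabs a).
  assert (HA : 0 <= A) by (unfold A, Rb in *; lra).
  assert (HTA : 2 * K * weight_tail p A <= 2 * K * weight_tail p (INR N - Rb)).
  { apply Rmult_le_compat_l; [lra | apply weight_tail_decreasing; unfold A, Rb in *; lra]. }
  generalize (abs_RInt_periodization_sub_partial N a Rb (Rle_refl _) ltac:(lra)).
  rewrite RInt_periodization_partial. intros X1.
  generalize (RInt_window_approx p p_gt1 gh K gh_dom (a - INR N) (a + INR N + 2) A
    ltac:(unfold A; generalize (Rle_abs a); lra) HA
    ltac:(unfold A; generalize (Rle_abs (- a)) (pos_INR N); rewrite Rabs_Ropp; lra)).
  generalize (IntR_window_approx p p_gt1 gh K gh_dom A HA). intros X3 X2.
  set (I := RInt (fun u => periodization u * h u) a (a + 1)) in *.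
  set (J := RInt gh (a - INR N) (a + INR N + 2)) in *.
  set (W := RInt gh (- A) A) in *.
  replace (I - IntR gh) with ((I - J) + (J - W) - (IntR gh - W)) by ring.
  generalize (Rabs_triang ((I - J) + (J - W)) (- (IntR gh - W))) (Rabs_triang (I - J) (J - W)).
  rewrite Rabs_Ropp. unfold Rminus in *. lra.
Qed.

End PeriodicFactor.

Section VanishingTransform.

Hypothesis g_transform_vanishes : forall m, (0 < m)%nat ->
  IntR (fun x => g x * cos (x * (2 * PI * INR m))) = 0 /\
  IntR (fun x => g x * sin (x * (2 * PI * INR m))) = 0.

Lemma IntR_mul_cos_mode u0 m :
  IntR (fun x => g x * cos_mode u0 m x) = match m with O => IntR g | S _ => 0 end.
Proof.
  destruct m as [|k].
  - apply IntR_ext. intros x. unfold cos_mode. simpl. rewrite Rmult_0_r, Rmult_0_l, cos_0. ring.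
  - set (v := 2 * PI * INR (S k)).
    destruct (g_transform_vanishes (S k) ltac:(lia)) as [H1 H2]. fold v in H1, H2.
    assert (Dc : dominated p K (fun x => g x * cos (x * v)))
      by (apply dominated_mult_bounded; auto; [intros; auto_continuous | intros; apply Rabs_cos_le_1]).
    assert (Ds : dominated p K (fun x => g x * sin (x * v)))
      by (apply dominated_mult_bounded; auto; [intros; auto_continuous | intros; apply Rabs_sin_le_1]).
    rewrite (IntR_ext _ (fun x => cos (v * u0) * (g x * cos (x * v)) + sin (v * u0) * (g x * sin (x * v)))).
    + rewrite (IntR_plus p p_gt1 _ _ _ _ (dominated_scal p _ (cos (v * u0)) K Dc)
                (dominated_scal p _ (sin (v * u0)) K Ds)).
      rewrite (IntR_scal p p_gt1 _ _ K Dc), (IntR_scal p p_gt1 _ _ K Ds), H1, H2. ring.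
    + intros x. unfold cos_mode. fold v.
      replace (v * (x - u0)) with (x * v - v * u0) by ring.
      rewrite cos_minus. ring.
Qed.

(* Poisson summation: the periodization has the Fourier coefficients of the constant [IntR g]. *)
Lemma periodization_eq_IntR u0 : periodization u0 = IntR g.
Proof.
  enough (periodization u0 - IntR g = 0) by lra.
  apply (fourier_coef_zero (fun u => periodization u - IntR g) u0).
  - intros x. apply continuous_R_minus; [apply periodization_continuous | apply continuous_const].
  - intros m.
    rewrite (RInt_ext_R _ (fun u => periodization u * cos_mode u0 m u + (- IntR g) * cos_mode u0 m u))
      by (intros; ring).
    rewrite (RInt_plus (V := R_CompleteNormedModule)).
    + rewrite RInt_scal_R, RInt_cos_mode by apply cos_mode_continuous.
      replace (u0 + / 2) with (u0 - / 2 + 1) by field.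
      rewrite (RInt_periodization_mul (cos_mode u0 m) (cos_mode_continuous u0 m)
        (cos_mode_periodic u0 m) (cos_mode_le_1 u0 m)).
      rewrite IntR_mul_cos_mode. unfold plus; simpl. destruct m; ring.
    + apply ex_RInt_R. intros; apply continuous_R_mult;
        [apply periodization_continuous | apply cos_mode_continuous].
    + apply ex_RInt_R. intros; apply continuous_R_mult; [apply continuous_const | apply cos_mode_continuous].
Qed.

End VanishingTransform.

Lemma is_zsum_periodization u : is_zsum (fun k => g (u - IZR k)) (periodization u).
Proof.
  exists (Series (left_terms u)), (Series (right_terms u)). split; [| split; auto].
  - apply (is_series_ext (left_terms u)); [| apply Series_correct, ex_series_left_terms].
    intros n. unfold left_terms. rewrite INR_IZR_INZ. auto.
  - apply (is_series_ext (right_terms u)); [| apply Series_correct, ex_series_right_terms].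
    intros n. unfold right_terms. f_equal.
    rewrite minus_IZR, opp_IZR, <- INR_IZR_INZ. ring.
Qed.

End Periodization.

Lemma Rpower_opp_half y b : 0 < y -> Rpower (y / 2) (- b) = Rpower 2 b * Rpower y (- b).
Proof. intros Hy. unfold Rpower. rewrite <- exp_plus. f_equal. rewrite ln_div by lra. ring. Qed.

Lemma sqr_mul_Rpower_opp y b : 0 < y -> y ^ 2 * Rpower y (- b) = Rpower y (2 - b).
Proof.
  intros Hy. replace (2 - b) with (INR 2 + - b) by (simpl; ring).
  rewrite Rpower_plus, Rpower_pow by auto. ring.
Qed.

Lemma Rpower_opp_le_succ y q : 1 <= y -> 0 <= q ->
  Rpower y (- q) <= Rpower 2 q * Rpower (1 + y) (- q).
Proof.
  intros Hy Hq.
  assert (H2y : Rpower (2 * y) (- q) <= Rpower (1 + y) (- q)) by (apply Rpower_opp_decreasing; lra).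
  rewrite <- Rpower_mult_distr in H2y by lra.
  assert (E : Rpower 2 q * Rpower 2 (- q) = 1).
  { unfold Rpower. rewrite <- exp_plus, <- exp_0. f_equal. ring. }
  generalize (Rpower_pos 2 q) (Rpower_pos y (- q)). nra.
Qed.

Section Sigmoidal.

Variables (sigma : R -> R) (alpha : R).
Hypothesis alpha_gt2 : 2 < alpha.
Hypothesis sigma_hyp : sigmoidal_hyp sigma alpha.

Lemma sigma_mono x y : x <= y -> sigma x <= sigma y.
Proof. apply sigma_hyp. Qed.

Lemma sigma_opp x : sigma (- x) = 1 - sigma x.
Proof. destruct sigma_hyp as (_ & _ & _ & H & _). specialize (H x). lra. Qed.

Lemma sigma_zero : sigma 0 = / 2.
Proof. generalize (sigma_opp 0). rewrite Ropp_0. lra. Qed.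

Lemma sigma_continuous x : continuous sigma x.
Proof. destruct sigma_hyp as (_ & _ & _ & _ & H & _). apply continuous_of_ex_derive. auto. Qed.

Lemma sigma_small_at_m_infty eps : 0 < eps -> exists M, forall x, x < M -> Rabs (sigma x) < eps.
Proof.
  intros He. destruct sigma_hyp as (_ & H & _). apply is_lim_spec in H.
  destruct (H (mkposreal eps He)) as [M HM]. exists M. intros x Hx.
  specialize (HM x Hx). simpl in HM. rewrite Rminus_0_r in HM. exact HM.
Qed.

Lemma sigma_near_1_at_p_infty eps : 0 < eps -> exists M, forall x, M < x -> 1 - eps < sigma x.
Proof.
  intros He. destruct sigma_hyp as (_ & _ & H & _). apply is_lim_spec in H.
  destruct (H (mkposreal eps He)) as [M HM]. exists M. intros x Hx.
  specialize (HM x Hx). simpl in HM. apply Rabs_def2 in HM. lra.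
Qed.

Lemma sigma_nonneg x : 0 <= sigma x.
Proof.
  apply Rnot_lt_le. intros Hneg.
  destruct (sigma_small_at_m_infty (- sigma x)) as [M HM]; [lra |].
  assert (sigma (Rmin (M - 1) x) <= sigma x) by (apply sigma_mono, Rmin_r).
  generalize (HM (Rmin (M - 1) x) ltac:(generalize (Rmin_l (M - 1) x); lra)).
  intros Habs. apply Rabs_def2 in Habs. lra.
Qed.

Lemma sigma_le_1 x : sigma x <= 1.
Proof. generalize (sigma_nonneg (- x)). rewrite sigma_opp. lra. Qed.

Let phi := phi_sigma sigma.

Lemma phi_even x : phi (- x) = phi x.
Proof.
  unfold phi, phi_sigma.
  replace (- x + 1) with (- (x - 1)) by ring. replace (- x - 1) with (- (x + 1)) by ring.
  rewrite !sigma_opp. ring.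
Qed.

Lemma phi_nonneg x : 0 <= phi x.
Proof. unfold phi, phi_sigma. assert (sigma (x - 1) <= sigma (x + 1)) by (apply sigma_mono; lra). lra. Qed.

Lemma phi_le_half x : phi x <= / 2.
Proof. unfold phi, phi_sigma. generalize (sigma_nonneg (x - 1)) (sigma_le_1 (x + 1)). lra. Qed.

Lemma phi_continuous x : continuous phi x.
Proof.
  unfold phi, phi_sigma. apply continuous_R_mult; [apply continuous_const |].
  apply continuous_R_minus.
  - apply (continuous_comp (fun x => x + 1) sigma); [auto_continuous | apply sigma_continuous].
  - apply (continuous_comp (fun x => x - 1) sigma); [auto_continuous | apply sigma_continuous].
Qed.

Lemma phi_decay : exists X0 K1, X0 <= -3 /\ 0 <= K1 /\
  forall x, x <= X0 -> (1 + x ^ 2) * phi x <= K1 * weight (alpha - 1) x.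
Proof.
  destruct sigma_hyp as (_ & _ & _ & _ & _ & _ & _ & _ & [C [M [HM HC]]]).
  set (b := 1 + alpha).
  assert (HC0 : 0 <= C).
  { generalize (HC M (Rle_refl M)) (Rpower_pos (Rabs M) (-1 - alpha)) (Rabs_pos (sigma M)). nra. }
  exists (Rmin (M - 1) (-3)), (C * Rpower 2 b * Rpower 2 (alpha - 1)).
  generalize (Rmin_l (M - 1) (-3)) (Rmin_r (M - 1) (-3)) (Rpower_pos 2 b) (Rpower_pos 2 (alpha - 1)).
  intros HM1 HM3 H2b H2a.
  split; [auto | split; [apply Rmult_le_pos; [apply Rmult_le_pos |]; lra |]].
  intros x Hx. set (y := - x).
  (* [phi x <= sigma (x + 1) / 2], and [|x + 1| >= y / 2] *)
  assert (Hs : sigma (x + 1) <= C * (Rpower 2 b * Rpower y (- b))).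
  { rewrite <- Rpower_opp_half by (unfold y; lra).
    eapply Rle_trans; [apply Rle_abs | eapply Rle_trans; [apply HC; lra |]].
    apply Rmult_le_compat_l; auto.
    replace (-1 - alpha) with (- b) by (unfold b; ring).
    apply Rpower_opp_decreasing; [unfold b; lra |]. rewrite Rabs_left by lra. unfold y; lra. }
  assert (Hphi : phi x <= C * (Rpower 2 b * Rpower y (- b)) / 2).
  { unfold phi, phi_sigma. generalize (sigma_nonneg (x - 1)). lra. }
  assert (Hw : Rpower y (- (alpha - 1)) <= Rpower 2 (alpha - 1) * weight (alpha - 1) x).
  { unfold weight. rewrite Rabs_left by lra. apply Rpower_opp_le_succ; unfold y; lra. }
  assert (Hx2 : 1 + x ^ 2 <= 2 * y ^ 2) by (unfold y; nra).
  assert (Hy2 : y ^ 2 * Rpower y (- b) = Rpower y (- (alpha - 1))).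
  { rewrite sqr_mul_Rpower_opp by (unfold y; lra). f_equal. unfold b. ring. }
  generalize (phi_nonneg x) (Rpower_pos y (- b)). intros.
  apply Rle_trans with (2 * y ^ 2 * (C * (Rpower 2 b * Rpower y (- b)) / 2)); [apply Rmult_le_compat; nra |].
  replace (2 * y ^ 2 * (C * (Rpower 2 b * Rpower y (- b)) / 2))
    with (C * Rpower 2 b * (y ^ 2 * Rpower y (- b))) by field.
  rewrite Hy2.
  apply Rle_trans with (C * Rpower 2 b * (Rpower 2 (alpha - 1) * weight (alpha - 1) x)); [| right; ring].
  apply Rmult_le_compat_l; nra.
Qed.

Lemma phi_moment_bound : exists K0, forall x, (1 + x ^ 2) * Rabs (phi x) <= K0 * weight (alpha - 1) x.
Proof.
  destruct phi_decay as [X0 [K1 [HX0 [HK1 Hfar]]]].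
  assert (Hp : 1 < alpha - 1) by lra.
  assert (HwX : 0 < weight (alpha - 1) X0) by apply weight_pos.
  set (K2 := (1 + X0 ^ 2) / 2 / weight (alpha - 1) X0).
  assert (HK2 : 0 <= K2) by (unfold K2; apply Rmult_le_pos; [nra | left; apply Rinv_0_lt_compat; auto]).
  exists (K1 + K2).
  assert (Hneg : forall x, x <= 0 -> (1 + x ^ 2) * Rabs (phi x) <= (K1 + K2) * weight (alpha - 1) x).
  { intros x Hx. rewrite Rabs_pos_eq by apply phi_nonneg.
    generalize (weight_pos (alpha - 1) x) (phi_nonneg x). intros.
    destruct (Rle_dec x X0) as [Hle | Hgt].
    - specialize (Hfar x Hle). nra.
    - assert (Hw : weight (alpha - 1) X0 <= weight (alpha - 1) x).
      { rewrite <- (weight_Rabs _ x), <- (weight_Rabs _ X0).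
        apply (weight_decreasing _ Hp). rewrite !Rabs_left1 by lra. lra. }
      assert ((1 + x ^ 2) * phi x <= (1 + X0 ^ 2) / 2).
      { generalize (phi_le_half x). assert (x ^ 2 <= X0 ^ 2) by nra. nra. }
      assert ((1 + X0 ^ 2) / 2 = K2 * weight (alpha - 1) X0) by (unfold K2; field; lra).
      assert (K2 * weight (alpha - 1) X0 <= K2 * weight (alpha - 1) x) by (apply Rmult_le_compat_l; auto).
      nra. }
  intros x. destruct (Rle_dec x 0) as [Hx | Hx]; [apply Hneg; auto |].
  rewrite <- (Ropp_involutive x), phi_even, weight_opp.
  replace ((- - x) ^ 2) with ((- x) ^ 2) by ring. apply Hneg. lra.
Qed.

(* [sigma (2 n) - sigma 0] telescopes into the values [2 phi (2 j + 1)], j < n *)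
Lemma phi_pos_odd_of_sigma_gt n : sigma 0 < sigma (2 * INR n) -> exists j, 0 < phi (2 * INR j + 1).
Proof.
  induction n as [|n IH]; intros H.
  - simpl in H. rewrite Rmult_0_r in H. lra.
  - destruct (Rlt_dec 0 (phi (2 * INR n + 1))) as [Hp|Hp]; [exists n; auto |].
    apply IH. unfold phi, phi_sigma in Hp. rewrite S_INR in H.
    replace (2 * INR n + 1 + 1) with (2 * (INR n + 1)) in Hp by ring.
    replace (2 * INR n + 1 - 1) with (2 * INR n) in Hp by ring.
    lra.
Qed.

Lemma phi_pos_somewhere : exists x1, 1 <= x1 /\ 0 < phi x1.
Proof.
  destruct (sigma_near_1_at_p_infty (/ 4)) as [M HM]; [lra |].
  destruct (INR_unbounded (Rabs M)) as [n Hn].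
  specialize (HM (2 * INR n) ltac:(generalize (Rle_abs M) (pos_INR n); lra)).
  destruct (phi_pos_odd_of_sigma_gt n) as [j Hj]; [rewrite sigma_zero; lra |].
  exists (2 * INR j + 1). split; auto. generalize (pos_INR j); lra.
Qed.

End Sigmoidal.

Lemma is_derive_zero_of_clustering_zeros (F : R -> R) x l : is_derive F x l ->
  (forall d, 0 < d -> exists h, h <> 0 /\ Rabs h < d /\ F (x + h) = 0) -> F x = 0 /\ l = 0.
Proof.
  intros Hd Hz.
  assert (Hx : F x = 0).
  { apply Req_of_abs_lt_all. intros eps He.
    destruct (continuous_R_eps F x eps (continuous_of_ex_derive F x (ex_intro _ l Hd)) He) as [d [Hd0 Hdd]].
    destruct (Hz d Hd0) as [h [_ [Hh HFh]]].
    specialize (Hdd (x + h) ltac:(replace (x + h - x) with h by ring; auto)).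
    rewrite HFh, Rminus_0_l, Rabs_Ropp in Hdd. rewrite Rminus_0_r. auto. }
  split; auto.
  apply is_derive_Reals in Hd.
  apply Req_of_abs_lt_all. intros eps He.
  destruct (Hd eps He) as [d Hdd].
  destruct (Hz d (cond_pos d)) as [h [Hh0 [Hh HFh]]].
  specialize (Hdd h Hh0 Hh). rewrite HFh, Hx in Hdd.
  replace ((0 - 0) / h - l) with (- (l - 0)) in Hdd by (field; auto).
  rewrite Rabs_Ropp in Hdd. auto.
Qed.

Lemma zeros_cluster_outside (F : R -> R) c v : 0 <= c -> c <= Rabs v ->
  (forall w, c < Rabs w -> F w = 0) ->
  forall d, 0 < d -> exists h, h <> 0 /\ Rabs h < d /\ F (v + h) = 0.
Proof.
  intros Hc Hv HF d Hd.
  destruct (Rle_dec 0 v) as [Hv0 | Hv0].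
  - exists (d / 2). rewrite Rabs_pos_eq in * by lra.
    repeat split; try lra. apply HF. rewrite Rabs_pos_eq; lra.
  - exists (- (d / 2)). rewrite Rabs_left in Hv by lra. rewrite Rabs_Ropp, Rabs_pos_eq by lra.
    repeat split; try lra. apply HF. rewrite Rabs_left; lra.
Qed.

Definition moment_kernel (f : R -> R) (nu : nat) (x : R) : R := f x * (- x) ^ nu.

Section EvenFunctionMoments.

Variable p : R.
Hypothesis p_gt1 : 1 < p.
Variables (f : R -> R) (K : R).
Hypothesis f_cont : forall x, continuous f x.
Hypothesis f_even : forall x, f (- x) = f x.
Hypothesis f_moment2 : forall x, (1 + x ^ 2) * Rabs (f x) <= K * weight p x.

Lemma FT_im_even v : FT_im f v = 0.
Proof.
  unfold FT_im. change (- IntR (fun x => f x * sin (x * v)) = 0).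
  rewrite (IntR_odd p p_gt1 _ K (dominated_mul_sin p f K f_cont f_moment2 v)); [ring |].
  intros x. replace (- x * v) with (- (x * v)) by ring. rewrite sin_neg, f_even. ring.
Qed.

Lemma is_derive_n_FT_im n v : is_derive_n (FT_im f) (S n) v 0.
Proof.
  apply (is_derive_n_ext (fun _ => 0)); [intros; symmetry; apply FT_im_even |].
  apply is_derive_n_const.
Qed.

Lemma is_derive_n_FT_re_1 v : is_derive_n (FT_re f) 1 v (FT_re_d1 f v).
Proof. apply (is_derive_FT_re p p_gt1 f K f_cont f_moment2). Qed.

Lemma is_derive_n_FT_re_2 v : is_derive_n (FT_re f) 2 v (FT_re_d2 f v).
Proof.
  apply (is_derive_ext (FT_re_d1 f)).
  - intros t. symmetry. apply is_derive_unique, is_derive_n_FT_re_1.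
  - apply (is_derive_FT_re_d1 p p_gt1 f K f_cont f_moment2).
Qed.

Lemma dominated_moment_kernel_1 : dominated p K (moment_kernel f 1).
Proof.
  split; [intros; unfold moment_kernel; auto_continuous |].
  intros x. unfold moment_kernel. rewrite Rabs_mult, pow_1, Rabs_Ropp, Rmult_comm.
  apply (weighted_bound_1 p f K f_moment2).
Qed.

Lemma dominated_moment_kernel_2 : dominated p K (moment_kernel f 2).
Proof.
  split; [intros; unfold moment_kernel; auto_continuous |].
  intros x. unfold moment_kernel. rewrite Rabs_mult, Rmult_comm.
  replace ((- x) ^ 2) with (x ^ 2) by ring. rewrite (Rabs_pos_eq (x ^ 2)) by nra.
  apply (weighted_bound_2 p f K f_moment2).
Qed.

Lemma is_moment_periodization nu u K' : dominated p K' (moment_kernel f nu) ->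
  is_moment f nu u (periodization (moment_kernel f nu) u).
Proof.
  intros Hdom. destruct (is_zsum_periodization p p_gt1 _ K' Hdom u) as [l1 [l2 [H1 [H2 H3]]]].
  exists l1, l2. split; [| split; auto].
  - revert H1. apply is_series_ext. intros n. unfold moment_kernel. f_equal. f_equal. ring.
  - revert H2. apply is_series_ext. intros n. unfold moment_kernel. f_equal. f_equal. ring.
Qed.

Lemma IntR_odd_mul_trig g K' (t : R -> R) : dominated p K' g ->
  (forall x, g (- x) * t (- x) = - (g x * t x)) ->
  (forall x, continuous t x) -> (forall x, Rabs (t x) <= 1) -> IntR (fun x => g x * t x) = 0.
Proof.
  intros Hg Hodd Htc Htb.
  apply (IntR_odd p p_gt1 _ K'); [apply dominated_mult_bounded |]; auto.
Qed.

Lemma first_moment_zero : (forall m, (0 < m)%nat -> FT_re_d1 f (2 * PI * INR m) = 0) ->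
  forall u, is_moment f 1 u 0.
Proof.
  intros Hd1 u.
  assert (Hodd : forall x, moment_kernel f 1 (- x) = - moment_kernel f 1 x)
    by (intros; unfold moment_kernel; rewrite f_even; ring).
  replace 0 with (IntR (moment_kernel f 1))
    by (apply (IntR_odd p p_gt1 _ K dominated_moment_kernel_1 Hodd)).
  rewrite <- (fun H => periodization_eq_IntR p p_gt1 _ K dominated_moment_kernel_1 H u).
  - apply (is_moment_periodization 1 u K dominated_moment_kernel_1).
  - intros m Hm. split.
    + apply (IntR_odd_mul_trig _ K); [apply dominated_moment_kernel_1 | | intros; auto_continuous |].
      * intros x. rewrite Hodd.
        replace (- x * (2 * PI * INR m)) with (- (x * (2 * PI * INR m))) by ring.
        rewrite cos_neg. ring.
      * intros; apply Rabs_cos_le_1.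
    + rewrite <- (Hd1 m Hm). apply IntR_ext. intros x. unfold moment_kernel. ring.
Qed.

Lemma second_moment_eq : (forall m, (0 < m)%nat -> FT_re_d2 f (2 * PI * INR m) = 0) ->
  forall u, is_moment f 2 u (IntR (moment_kernel f 2)).
Proof.
  intros Hd2 u.
  rewrite <- (fun H => periodization_eq_IntR p p_gt1 _ K dominated_moment_kernel_2 H u).
  - apply (is_moment_periodization 2 u K dominated_moment_kernel_2).
  - intros m Hm. split.
    + rewrite (IntR_ext _ (fun x => -1 * (- (x ^ 2 * f x * cos (x * (2 * PI * INR m))))))
        by (intros x; unfold moment_kernel; ring).
      rewrite (IntR_scal p p_gt1 _ (-1) K (dominated_d2 p f K f_cont f_moment2 _)).
      change (-1 * FT_re_d2 f (2 * PI * INR m) = 0). rewrite Hd2 by auto. ring.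
    + apply (IntR_odd_mul_trig _ K); [apply dominated_moment_kernel_2 | | intros; auto_continuous |].
      * intros x. unfold moment_kernel. rewrite f_even.
        replace (- x * (2 * PI * INR m)) with (- (x * (2 * PI * INR m))) by ring.
        rewrite sin_neg. ring.
      * intros; apply Rabs_sin_le_1.
Qed.

Lemma FT_re_d2_0 : FT_re_d2 f 0 = - IntR (moment_kernel f 2).
Proof.
  unfold FT_re_d2.
  rewrite (IntR_ext _ (fun x => -1 * moment_kernel f 2 x)).
  - rewrite (IntR_scal p p_gt1 _ (-1) K dominated_moment_kernel_2). ring.
  - intros x. unfold moment_kernel. rewrite Rmult_0_r, cos_0. ring.
Qed.

Lemma FT_re_derivatives_vanish : FT_deriv_cond f -> forall m, (0 < m)%nat ->
  FT_re_d1 f (2 * PI * INR m) = 0 /\ FT_re_d2 f (2 * PI * INR m) = 0.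
Proof.
  intros Hcond m Hm.
  destruct (Hcond (Z.of_nat m) 1%nat ltac:(lia) ltac:(auto)) as [H1 _].
  destruct (Hcond (Z.of_nat m) 2%nat ltac:(lia) ltac:(auto)) as [H2 _].
  rewrite <- INR_IZR_INZ in H1, H2.
  split.
  - apply (is_derive_n_unique _ 1) in H1. rewrite <- H1. symmetry. apply is_derive_n_unique, is_derive_n_FT_re_1.
  - apply (is_derive_n_unique _ 2) in H2. rewrite <- H2. symmetry. apply is_derive_n_unique, is_derive_n_FT_re_2.
Qed.

Lemma second_moment_pos x1 : (forall x, 0 <= f x) -> x1 <> 0 -> 0 < f x1 ->
  0 < IntR (moment_kernel f 2).
Proof.
  intros Hnn Hx1 Hpos.
  apply (IntR_pos p p_gt1 _ K dominated_moment_kernel_2 x1); unfold moment_kernel.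
  - intros x. apply Rmult_le_pos; [auto | nra].
  - apply Rmult_lt_0_compat; [auto |]. replace ((- x1) ^ 2) with (x1 ^ 2) by ring.
    apply pow2_gt_0; auto.
Qed.

Lemma FT_deriv_cond_of_band_limited :
  (forall v, 2 * PI < Rabs v -> FT_re f v = 0 /\ FT_im f v = 0) -> FT_deriv_cond f.
Proof.
  intros Hband.
  assert (HPI : 0 < 2 * PI) by (generalize PI_RGT_0; lra).
  assert (Hre : forall w, 2 * PI < Rabs w -> FT_re f w = 0) by (intros w Hw; apply (Hband w Hw)).
  assert (Hd1 : forall w, 2 * PI < Rabs w -> FT_re_d1 f w = 0).
  { intros w Hw.
    apply (is_derive_zero_of_clustering_zeros (FT_re f) w); [apply is_derive_n_FT_re_1 |].
    apply (zeros_cluster_outside _ (Rabs w)); [apply Rabs_pos | lra |].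
    intros z Hz. apply Hre. lra. }
  intros k s Hk Hs.
  assert (Hkv : 2 * PI <= Rabs (2 * PI * IZR k)).
  { rewrite Rabs_mult, (Rabs_pos_eq (2 * PI)) by lra.
    assert (1 <= Rabs (IZR k)) by (rewrite <- abs_IZR; apply IZR_le; lia).
    nra. }
  assert (Hzero := fun F => zeros_cluster_outside F (2 * PI) _ ltac:(lra) Hkv).
  destruct Hs as [-> | ->]; (split; [| apply is_derive_n_FT_im]).
  - destruct (is_derive_zero_of_clustering_zeros (FT_re f) _ _ (is_derive_n_FT_re_1 (2 * PI * IZR k)))
      as [_ Hz]; [apply Hzero, Hre |].
    rewrite <- Hz. apply is_derive_n_FT_re_1.
  - destruct (is_derive_zero_of_clustering_zeros (FT_re_d1 f) _ _
      (is_derive_FT_re_d1 p p_gt1 f K f_cont f_moment2 (2 * PI * IZR k))) as [_ Hz]; [apply Hzero, Hd1 |].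
    rewrite <- Hz. apply is_derive_n_FT_re_2.
Qed.

End EvenFunctionMoments.

Theorem lemma4p2 (sigma : R -> R) (alpha : R) :
  2 < alpha ->
  sigmoidal_hyp sigma alpha ->
  (FT_deriv_cond (phi_sigma sigma) ->
     forall u : R,
       is_moment (phi_sigma sigma) 1 u 0 /\
       exists L : R,
         is_moment (phi_sigma sigma) 2 u L /\
         is_derive_n (FT_re (phi_sigma sigma)) 2 0 (- L) /\
         is_derive_n (FT_im (phi_sigma sigma)) 2 0 0 /\
         0 < L) /\
  ((forall v, 2 * PI < Rabs v ->
      FT_re (phi_sigma sigma) v = 0 /\ FT_im (phi_sigma sigma) v = 0) ->
     FT_deriv_cond (phi_sigma sigma)).
Proof.
  intros Halpha Hsigma.
  assert (Hp : 1 < alpha - 1) by lra.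
  destruct (phi_moment_bound sigma alpha Halpha Hsigma) as [K HK].
  assert (Hc := phi_continuous sigma alpha Hsigma).
  assert (Hev := phi_even sigma alpha Hsigma).
  split; [| apply (FT_deriv_cond_of_band_limited _ Hp _ K Hc Hev HK)].
  intros Hcond u.
  assert (Hvanish := FT_re_derivatives_vanish _ Hp _ K Hc HK Hcond).
  split; [apply (first_moment_zero _ Hp _ K Hc Hev HK); apply Hvanish |].
  exists (IntR (moment_kernel (phi_sigma sigma) 2)). split; [| split; [| split]].
  - apply (second_moment_eq _ Hp _ K Hc Hev HK). apply Hvanish.
  - rewrite <- (FT_re_d2_0 _ Hp _ K Hc HK). apply (is_derive_n_FT_re_2 _ Hp _ K Hc HK).
  - apply (is_derive_n_FT_im _ Hp _ K Hc Hev HK).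
  - destruct (phi_pos_somewhere sigma alpha Hsigma) as [x1 [Hx1 Hpos]].
    apply (second_moment_pos _ Hp _ K Hc HK x1); [apply (phi_nonneg sigma alpha Hsigma) | lra | auto].
Qed.
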